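(* Let $\mathsf{CL}'$ be the calculus $\mathsf{CL}$ in which the rule L$>$ is replaced by L$>^\star$ and the rule Mon$\forall$ is added. For every formula $A_0$ and world label $x_0$, root-first proof search for a $\mathsf{CL}'$-derivation of $\Rightarrow x_0:A_0$ built in accordance with the proof search strategy terminates in a finite number of steps, every branch ending with either an initial sequent or a saturated sequent.
   Context: Syntax: world labels, neighbourhood labels; relational atoms $a\in N(x)$, $x\in a$, $a\subseteq b$; labelled formulas: these, $x:A$, $a\Vdash^\exists A$, $a\Vdash^\forall A$, $x\Vdash_aA|B$, for $A,B\in\mathcal{L}::=p\mid\bot\mid A\wedge B\mid A\lor B\mid A\to B\mid A>B$. Sequents: multisets, relational atoms only on the left. Rules of $\mathsf{CL}'$ (premisses / conclusion; ''fresh'': label not in conclusion): initial sequents $x:p,\Gamma\Rightarrow\Delta,x:p$ ($p$ atomic), $x:\bot,\Gamma\Rightarrow\Delta$; G3 rules for $\wedge,\vee,\to$ on $x:A$; L$\forall$: $x:A,x\in a,a\Vdash^\forall A,\Gamma\Rightarrow\Delta$ / $x\in a,a\Vdash^\forall A,\Gamma\Rightarrow\Delta$; R$\forall$ (x fresh): $x\in a,\Gamma\Rightarrow\Delta,x:A$ / $\Gamma\Rightarrow\Delta,a\Vdash^\forall A$; L$\exists$ (x fresh): $x\in a,x:A,\Gamma\Rightarrow\Delta$ / $a\Vdash^\exists A,\Gamma\Rightarrow\Delta$; R$\exists$: $x\in a,\Gamma\Rightarrow\Delta,x:A,a\Vdash^\exists A$ / $x\in a,\Gamma\Rightarrow\Delta,a\Vdash^\exists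 A$; R$>$ (a fresh): $a\in N(x),a\Vdash^\exists A,\Gamma\Rightarrow\Delta,x\Vdash_aA|B$ / $\Gamma\Rightarrow\Delta,x:A>B$; L$>^\star$: $a\in N(x),x:A>B,\Gamma\Rightarrow\Delta,a\Vdash^\exists A$ and $a\Vdash^\exists A,x\Vdash_aA|B,a\in N(x),x:A>B,\Gamma\Rightarrow\Delta$ / $a\in N(x),x:A>B,\Gamma\Rightarrow\Delta$; R$|$: $c\in N(x),c\subseteq a,\Gamma\Rightarrow\Delta,x\Vdash_aA|B,c\Vdash^\exists A$ and $c\in N(x),c\subseteq a,\Gamma\Rightarrow\Delta,x\Vdash_aA|B,c\Vdash^\forall A\to B$ / $c\in N(x),c\subseteq a,\Gamma\Rightarrow\Delta,x\Vdash_aA|B$; L$|$ (c fresh): $c\in N(x),c\subseteq a,c\Vdash^\exists A,c\Vdash^\forall A\to B,\Gamma\Rightarrow\Delta$ / $x\Vdash_aA|B,\Gamma\Rightarrow\Delta$; Ref: $a\subseteq a,\Gamma\Rightarrow\Delta$ / $\Gamma\Rightarrow\Delta$; Tr: $c\subseteq a,c\subseteq b,b\subseteq a,\Gamma\Rightarrow\Delta$ / $c\subseteq b,b\subseteq a,\Gamma\Rightarrow\Delta$; L$\subseteq$: $x\in a,a\subseteq b,x\in b,\Gamma\Rightarrow\Delta$ / $x\in a,a\subseteq b,\Gamma\Rightarrow\Delta$; Mon$\forall$: $b\subseteq a,b\Vdash^\forall A,a\Vdash^\forall A,\Gamma\Rightarrow\Delta$ / $b\subseteq a,a\Vdash^\forall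 A,\Gamma\Rightarrow\Delta$. For a branch $S_0,S_1,\dots$ with $S_0={}\Rightarrow x_0:A_0$ and $S_k=\Gamma_k\Rightarrow\Delta_k$, write $\downarrow\Gamma_k$ ($\downarrow\Delta_k$) for the union of the antecedents (succedents) of $S_0,\dots,S_k$. Saturation conditions for $\Gamma\Rightarrow\Delta=S_k$ (with $\downarrow\Gamma,\downarrow\Delta$ the corresponding unions): L$\wedge$: $x:A\wedge B\in\downarrow\Gamma$ implies $x:A,x:B\in\downarrow\Gamma$; R$\wedge$: $x:A\wedge B\in\downarrow\Delta$ implies $x:A$ or $x:B$ in $\downarrow\Delta$; L$\vee$: $x:A\vee B\in\downarrow\Gamma$ implies $x:A$ or $x:B$ in $\downarrow\Gamma$; R$\vee$: $x:A\vee B\in\downarrow\Delta$ implies $x:A,x:B\in\downarrow\Delta$; L$\to$: $x:A\to B\in\downarrow\Gamma$ implies $x:B\in\downarrow\Gamma$ or $x:A\in\downarrow\Delta$; R$\to$: $x:A\to B\in\Delta$ implies $x:A\in\downarrow\Gamma$ and $x:B\in\downarrow\Delta$; Ref: if $a$ occurs in $\Gamma\cup\Delta$ then $a\subseteq a\in\Gamma$; Tr: $a\subseteq b,b\subseteq c\in\Gamma$ implies $a\subseteq c\in\Gamma$; L$\subseteq$: $x\in a,a\subseteq b\in\Gamma$ implies $x\in b\in\Gamma$; L$\forall$: $x\in a,a\Vdash^\forall A\in\Gamma$ implies $x:A\in\downarrow\Gamma$; R$\forall$: $a\Vdash^\forall A\in\downarrow\Delta$ implies for some $x$, $x\in a\in\Gamma$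 and $x:A\in\downarrow\Delta$; L$\exists$: $a\Vdash^\exists A\in\downarrow\Gamma$ implies for some $x$, $x\in a\in\Gamma$ and $x:A\in\downarrow\Gamma$; R$\exists$: $x\in a\in\Gamma$ and $a\Vdash^\exists A\in\Delta$ imply $x:A\in\downarrow\Delta$; R$>$: $x:A>B\in\downarrow\Delta$ implies for some $a$, $a\in N(x)\in\Gamma$, $a\Vdash^\exists A\in\downarrow\Gamma$, $x\Vdash_aA|B\in\Delta$; L$>^\star$: $a\in N(x),x:A>B\in\Gamma$ imply $a\Vdash^\exists A\in\downarrow\Delta$, or both $a\Vdash^\exists A$ and $x\Vdash_aA|B$ in $\downarrow\Gamma$; R$|$: $c\in N(x),c\subseteq a\in\Gamma$ and $x\Vdash_aA|B\in\Delta$ imply $c\Vdash^\exists A\in\Delta$ or $c\Vdash^\forall A\to B\in\downarrow\Delta$; L$|$: $x\Vdash_aA|B\in\downarrow\Gamma$ implies for some $c$, $c\in N(x),c\subseteq a\in\Gamma$, $c\Vdash^\exists A\in\downarrow\Gamma$ and $c\Vdash^\forall A\to B\in\Gamma$; Mon$\forall$: $b\subseteq a,a\Vdash^\forall A\in\Gamma$ imply $b\Vdash^\forall A\in\Gamma$. A sequent is saturated if no $x:p$ is in $\Gamma\cap\Delta$, no $x:\bot$ is in $\Gamma$, and it satisfies all these saturation conditions. Proof search strategy: (1) rules introducing a new label (R$\forall$, L$\exists$, R$>$, L$|$: dynamic rules) are applied only if no other (static) rule is applicable, except that R$>$ is applied before L$>^\star$; (2) a rule is not applied to a sequent that satisfies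 the saturation condition associated with that rule. *)

From Stdlib Require Import List Permutation.
Import ListNotations.

Inductive formula : Type :=
  | Atm (p : nat)
  | Bot
  | And (A B : formula)
  | Or  (A B : formula)
  | Imp (A B : formula)
  | Cnd (A B : formula).           (* A > B *)

(* World labels and neighbourhood labels are both represented by nat; the
   sort of a label is determined by its position in the labelled formula. *)
Definition wlabel := nat.
Definition nlabel := nat.

Inductive lform : Type :=
  | InN  (a : nlabel) (x : wlabel)                 (* a ∈ N(x)      *)
  | Mem  (x : wlabel) (a : nlabel)                 (* x ∈ a         *)
  | Sub  (a b : nlabel)                            (* a ⊆ b         *)
  | Lab  (x : wlabel) (A : formula)                (* x : A         *)
  | FEx  (a : nlabel) (A : formula)                (* a ⊩∃ A        *)
  | FAll (a : nlabel) (A : formula)                (* a ⊩∀ A        *)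
  | FCnd (x : wlabel) (a : nlabel) (A B : formula). (* x ⊩_a A | B  *)

Definition wlabs (f : lform) : list wlabel :=
  match f with
  | InN _ x => [x] | Mem x _ => [x] | Sub _ _ => []
  | Lab x _ => [x] | FEx _ _ => [] | FAll _ _ => [] | FCnd x _ _ _ => [x]
  end.
Definition nlabs (f : lform) : list nlabel :=
  match f with
  | InN a _ => [a] | Mem _ a => [a] | Sub a b => [a; b]
  | Lab _ _ => [] | FEx a _ => [a] | FAll a _ => [a] | FCnd _ a _ _ => [a]
  end.

(* Sequents Γ ⇒ Δ; Γ and Δ are multisets, represented by lists up to
   permutation. *)
Definition sequent : Type := (list lform * list lform)%type.

Definition occW (x : wlabel) (G D : list lform) : Prop :=
  exists f, (In f G \/ In f D) /\ In x (wlabs f).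
Definition occN (a : nlabel) (G D : list lform) : Prop :=
  exists f, (In f G \/ In f D) /\ In a (nlabs f).

Definition initial (S : sequent) : Prop :=
  (exists x p, In (Lab x (Atm p)) (fst S) /\ In (Lab x (Atm p)) (snd S))
  \/ (exists x, In (Lab x Bot) (fst S)).

(* ↓Γ and ↓Δ: the current sequent is (G, D), H is the list of the earlier
   sequents S_0, ..., S_{k-1} of the branch (in any order). *)
Definition dA (H : list sequent) (G : list lform) (f : lform) : Prop :=
  In f G \/ exists S, In S H /\ In f (fst S).
Definition dS (H : list sequent) (D : list lform) (f : lform) : Prop :=
  In f D \/ exists S, In S H /\ In f (snd S).

Section SatConditions.
Variables (H : list sequent) (G D : list lform).

Definition sLand x A B := dA H G (Lab x (And A B)) -> dA H G (Lab x A) /\ dA H G (Lab x B).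
Definition sRand x A B := dS H D (Lab x (And A B)) -> dS H D (Lab x A) \/ dS H D (Lab x B).
Definition sLor  x A B := dA H G (Lab x (Or A B)) -> dA H G (Lab x A) \/ dA H G (Lab x B).
Definition sRor  x A B := dS H D (Lab x (Or A B)) -> dS H D (Lab x A) /\ dS H D (Lab x B).
Definition sLimp x A B := dA H G (Lab x (Imp A B)) -> dA H G (Lab x B) \/ dS H D (Lab x A).
Definition sRimp x A B := In (Lab x (Imp A B)) D -> dA H G (Lab x A) /\ dS H D (Lab x B).
Definition sRef (a : nlabel) := occN a G D -> In (Sub a a) G.
Definition sTr (a b c : nlabel) := In (Sub a b) G -> In (Sub b c) G -> In (Sub a c) G.
Definition sLsub x a b := In (Mem x a) G -> In (Sub a b) G -> In (Mem x b) G.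
Definition sLall x a A := In (Mem x a) G -> In (FAll a A) G -> dA H G (Lab x A).
Definition sRall a A :=
  dS H D (FAll a A) -> exists x, In (Mem x a) G /\ dS H D (Lab x A).
Definition sLex a A :=
  dA H G (FEx a A) -> exists x, In (Mem x a) G /\ dA H G (Lab x A).
Definition sRex x a A := In (Mem x a) G -> In (FEx a A) D -> dS H D (Lab x A).
Definition sRcnd x A B :=
  dS H D (Lab x (Cnd A B)) ->
  exists a, In (InN a x) G /\ dA H G (FEx a A) /\ In (FCnd x a A B) D.
Definition sLcnd a x A B :=
  In (InN a x) G -> In (Lab x (Cnd A B)) G ->
  dS H D (FEx a A) \/ (dA H G (FEx a A) /\ dA H G (FCnd x a A B)).
Definition sRbar c x a A B :=
  In (InN c x) G -> In (Sub c a) G -> In (FCnd x a A B) D ->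
  In (FEx c A) D \/ dS H D (FAll c (Imp A B)).
Definition sLbar x a A B :=
  dA H G (FCnd x a A B) ->
  exists c, In (InN c x) G /\ In (Sub c a) G /\ dA H G (FEx c A)
            /\ In (FAll c (Imp A B)) G.
Definition sMon b a A := In (Sub b a) G -> In (FAll a A) G -> In (FAll b A) G.

Definition saturated : Prop :=
  (~ exists x p, In (Lab x (Atm p)) G /\ In (Lab x (Atm p)) D) /\
  (~ exists x, In (Lab x Bot) G) /\
  (forall x A B, sLand x A B) /\ (forall x A B, sRand x A B) /\
  (forall x A B, sLor x A B) /\ (forall x A B, sRor x A B) /\
  (forall x A B, sLimp x A B) /\ (forall x A B, sRimp x A B) /\
  (forall a, sRef a) /\ (forall a b c, sTr a b c) /\
  (forall x a b, sLsub x a b) /\ (forall x a A, sLall x a A) /\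
  (forall a A, sRall a A) /\ (forall a A, sLex a A) /\
  (forall x a A, sRex x a A) /\ (forall x A B, sRcnd x A B) /\
  (forall a x A B, sLcnd a x A B) /\ (forall c x a A B, sRbar c x a A B) /\
  (forall x a A B, sLbar x a A B) /\ (forall b a A, sMon b a A).
End SatConditions.

Inductive rule : Type :=
  | RLand | RRand | RLor | RRor | RLimp | RRimp
  | RLall | RRall | RLex | RRex | RRcnd | RLcnd | RRbar | RLbar
  | RRef | RTr | RLsub | RMon.

(* dynamic rules: those introducing a new label *)
Definition dynamic (r : rule) : Prop :=
  r = RRall \/ r = RLex \/ r = RRcnd \/ r = RLbar.

(* rapp H G D r Q : rule r can be applied, root-first, to the conclusion
   (G, D) (whose branch history is H) with premisses Q, and the application
   is not excluded by clause (2) of the strategy, i.e. (G, D) does not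
   satisfy the saturation condition associated with this application. *)
Inductive rapp (H : list sequent) (G D : list lform) : rule -> list sequent -> Prop :=
  | ap_Land x A B ctx : Permutation G (Lab x (And A B) :: ctx) ->
      ~ sLand H G x A B ->
      rapp H G D RLand [(Lab x A :: Lab x B :: ctx, D)]
  | ap_Rand x A B ctx : Permutation D (Lab x (And A B) :: ctx) ->
      ~ sRand H D x A B ->
      rapp H G D RRand [(G, Lab x A :: ctx); (G, Lab x B :: ctx)]
  | ap_Lor x A B ctx : Permutation G (Lab x (Or A B) :: ctx) ->
      ~ sLor H G x A B ->
      rapp H G D RLor [(Lab x A :: ctx, D); (Lab x B :: ctx, D)]
  | ap_Ror x A B ctx : Permutation D (Lab x (Or A B) :: ctx) ->
      ~ sRor H D x A B ->
      rapp H G D RRor [(G, Lab x A :: Lab x B :: ctx)]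
  | ap_Limp x A B ctx : Permutation G (Lab x (Imp A B) :: ctx) ->
      ~ sLimp H G D x A B ->
      rapp H G D RLimp [(ctx, Lab x A :: D); (Lab x B :: ctx, D)]
  | ap_Rimp x A B ctx : Permutation D (Lab x (Imp A B) :: ctx) ->
      ~ sRimp H G D x A B ->
      rapp H G D RRimp [(Lab x A :: G, Lab x B :: ctx)]
  | ap_Lall x a A : In (Mem x a) G -> In (FAll a A) G ->
      ~ sLall H G x a A ->
      rapp H G D RLall [(Lab x A :: G, D)]
  | ap_Rall a A x ctx : Permutation D (FAll a A :: ctx) -> ~ occW x G D ->
      ~ sRall H G D a A ->
      rapp H G D RRall [(Mem x a :: G, Lab x A :: ctx)]
  | ap_Lex a A x ctx : Permutation G (FEx a A :: ctx) -> ~ occW x G D ->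
      ~ sLex H G a A ->
      rapp H G D RLex [(Mem x a :: Lab x A :: ctx, D)]
  | ap_Rex x a A : In (Mem x a) G -> In (FEx a A) D ->
      ~ sRex H G D x a A ->
      rapp H G D RRex [(G, Lab x A :: D)]
  | ap_Rcnd x A B a ctx : Permutation D (Lab x (Cnd A B) :: ctx) -> ~ occN a G D ->
      ~ sRcnd H G D x A B ->
      rapp H G D RRcnd [(InN a x :: FEx a A :: G, FCnd x a A B :: ctx)]
  | ap_Lcnd a x A B : In (InN a x) G -> In (Lab x (Cnd A B)) G ->
      ~ sLcnd H G D a x A B ->
      rapp H G D RLcnd [(G, FEx a A :: D);
                        (FEx a A :: FCnd x a A B :: G, D)]
  | ap_Rbar c x a A B : In (InN c x) G -> In (Sub c a) G -> In (FCnd x a A B) D ->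
      ~ sRbar H G D c x a A B ->
      rapp H G D RRbar [(G, FEx c A :: D); (G, FAll c (Imp A B) :: D)]
  | ap_Lbar x a A B c ctx : Permutation G (FCnd x a A B :: ctx) -> ~ occN c G D ->
      ~ sLbar H G x a A B ->
      rapp H G D RLbar
        [(InN c x :: Sub c a :: FEx c A :: FAll c (Imp A B) :: ctx, D)]
  | ap_Ref a : ~ sRef G D a ->
      rapp H G D RRef [(Sub a a :: G, D)]
  | ap_Tr a b c : In (Sub a b) G -> In (Sub b c) G ->
      ~ sTr G a b c ->
      rapp H G D RTr [(Sub a c :: G, D)]
  | ap_Lsub x a b : In (Mem x a) G -> In (Sub a b) G ->
      ~ sLsub G x a b ->
      rapp H G D RLsub [(Mem x b :: G, D)]
  | ap_Mon b a A : In (Sub b a) G -> In (FAll a A) G ->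
      ~ sMon G b a A ->
      rapp H G D RMon [(FAll b A :: G, D)].

Definition seq_perm (S T : sequent) : Prop :=
  Permutation (fst S) (fst T) /\ Permutation (snd S) (snd T).

Definition app (H : list sequent) (S : sequent) (r : rule) (P : list sequent) : Prop :=
  exists Q, rapp H (fst S) (snd S) r Q /\ Forall2 seq_perm P Q.

Definition applicable (H : list sequent) (S : sequent) (r : rule) : Prop :=
  exists P, app H S r P.

(* Clause (1) of the strategy: dynamic rules are applied only if no static
   rule is applicable, except that R> is applied before L>* (R> only waits
   for static rules other than L>*, and L>* waits for R>). *)
Definition priority_ok (H : list sequent) (S : sequent) (r : rule) : Prop :=
  match r with
  | RRall | RLex | RLbar =>
      forall r', ~ dynamic r' -> ~ applicable H S r'
  | RRcnd =>
      forall r', ~ dynamic r' -> r' <> RLcnd -> ~ applicable H S r'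
  | RLcnd => ~ applicable H S RRcnd
  | _ => True
  end.

(* A branch is a list of sequents S_k :: ... :: S_0 (current one first). *)
Definition sstep (B : list sequent) (S' : sequent) : Prop :=
  match B with
  | [] => False
  | S0 :: H => ~ initial S0 /\
      exists r P, app H S0 r P /\ priority_ok H S0 r /\ In S' P
  end.

Definition root (x0 : wlabel) (A0 : formula) : sequent := ([], [Lab x0 A0]).

Inductive branch (S0 : sequent) : list sequent -> Prop :=
  | br_root : branch S0 [S0]
  | br_ext B S' : branch S0 B -> sstep B S' -> branch S0 (S' :: B).

Definition extends (B' B : list sequent) : Prop :=
  exists S', B' = S' :: B /\ sstep B S'.

Definition branch_saturated (B : list sequent) : Prop :=
  match B with
  | [] => False
  | (G, D) :: H => saturated H G D
  end.

(* Proof search terminates because only finitely many labelled formulas can ever occur on a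
   branch. Every label gets an address: the chain of dynamic rule applications, with their
   principal formulas, leading back to the root world. Distinct labels on a branch have
   distinct addresses, since a repeated address would mean that the saturation condition of
   the rule creating the label was already met. Addresses range over a finite set: the steps
   creating worlds are bounded by the nesting depth of conditionals in A0, R> steps alternate
   with them, and a chain of L| steps never repeats a pair (A, B), because Mon∀ and Ref, which
   the strategy applies first, would otherwise already satisfy the L| condition. Each search
   step adds a labelled formula not yet on the branch, so branches are finite. A branch that
   cannot be extended is initial or saturated: a violated saturation condition makes its rule
   applicable, and the strategy always permits some applicable rule. *)

From Pilot Require Import Defs.
From Stdlib Require Import List Permutation Arith Lia Classical.
Import ListNotations.

(** * Subformulas and addresses *)

Fixpoint cnd_depth (F : formula) : nat :=
  match F with
  | Atm _ | Bot => 0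
  | And A B | Or A B | Imp A B => Nat.max (cnd_depth A) (cnd_depth B)
  | Cnd A B => S (Nat.max (cnd_depth A) (cnd_depth B))
  end.

(* [A -> B] counts as a subformula of [A > B] because L| introduces [c ⊩∀ A -> B]. *)
Fixpoint subformulas (F : formula) : list formula :=
  match F with
  | Atm _ | Bot => [F]
  | And A B | Or A B | Imp A B => F :: subformulas A ++ subformulas B
  | Cnd A B => F :: Imp A B :: subformulas A ++ subformulas B
  end.

Lemma subformulas_refl F : In F (subformulas F).
Proof. destruct F; left; reflexivity. Qed.

Lemma subformulas_incl F G : In G (subformulas F) -> incl (subformulas G) (subformulas F).
Proof.
  induction F; cbn; intros [<- | HG]; try apply incl_refl; try contradiction;
    try (apply incl_tl; apply in_app_or in HG as [HG | HG];
         [apply incl_appl | apply incl_appr]; auto; fail).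
  destruct HG as [<- | HG].
  - apply incl_tl, incl_refl.
  - do 2 apply incl_tl. apply in_app_or in HG as [HG | HG];
      [apply incl_appl | apply incl_appr]; auto.
Qed.

Lemma subformulas_trans F G K :
  In G (subformulas F) -> In K (subformulas G) -> In K (subformulas F).
Proof. intros HG HK. exact (subformulas_incl F G HG K HK). Qed.

Lemma subformulas_Cnd F A B :
  In (Cnd A B) (subformulas F) ->
  In A (subformulas F) /\ In B (subformulas F) /\ In (Imp A B) (subformulas F).
Proof.
  intros HF; repeat split; apply (subformulas_trans _ _ _ HF); cbn; auto;
    do 2 right; apply in_or_app; auto using subformulas_refl.
Qed.

(* The address of a label lists the dynamic rule applications that produced it, read back to
   the root world: a world comes from R∀ or L∃ on a neighbourhood, a neighbourhood from R> on
   a world or from L| on a neighbourhood of the same world. *)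
Inductive origin : Type :=
  | ORall (A : formula)
  | OLex (A : formula)
  | ORcnd (A B : formula)
  | OLbar (A B : formula).

Definition address := list origin.

Fixpoint world_depth (p : address) : nat :=
  match p with
  | [] => 0
  | (ORall _ | OLex _) :: q => S (world_depth q)
  | _ :: q => world_depth q
  end.

Fixpoint bar_prefix (p : address) : list (formula * formula) :=
  match p with
  | OLbar A B :: q => (A, B) :: bar_prefix q
  | _ => []
  end.

(* [addr_wf true p]: [p] is a world address; [addr_wf false p]: a neighbourhood address. *)
Fixpoint addr_wf (world : bool) (p : address) : Prop :=
  match p with
  | [] => world = true
  | (ORall _ | OLex _) :: q => world = true /\ addr_wf false q
  | ORcnd _ _ :: q => world = false /\ addr_wf true q
  | OLbar A B :: q => world = false /\ addr_wf false q /\ ~ In (A, B) (bar_prefix q)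
  end.

Definition origin_over (Sc : list formula) (o : origin) : Prop :=
  match o with
  | ORall A | OLex A => In A Sc
  | ORcnd A B | OLbar A B => In A Sc /\ In B Sc
  end.

Definition addr_ok (Sc : list formula) (M : nat) (world : bool) (p : address) : Prop :=
  addr_wf world p /\ Forall (origin_over Sc) p /\ world_depth p <= M.

Lemma bar_prefix_length Sc p :
  Forall (origin_over Sc) p -> addr_wf false p -> length (bar_prefix p) <= length Sc * length Sc.
Proof.
  intros Hover Hwf. rewrite <- length_prod. apply NoDup_incl_length.
  - induction p as [|[A|A|A B|A B] p IH]; cbn in *; try apply NoDup_nil.
    destruct Hwf as (_ & Hwf & Hnew). inversion Hover. constructor; auto.
  - induction p as [|[A|A|A B|A B] p IH]; cbn; try apply incl_nil_l.
    inversion Hover as [|? ? HAB Hp]; subst. destruct Hwf as (_ & Hwf & _).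
    apply incl_cons; auto. apply in_prod; apply HAB.
Qed.

Lemma addr_wf_length Sc p : Forall (origin_over Sc) p -> forall world, addr_wf world p ->
  length p <= world_depth p * (length Sc * length Sc + 2)
              + (if world then 0 else S (length (bar_prefix p))).
Proof.
  induction p as [|o p IH]; intros Hover world Hwf; [cbn in *; subst; cbn; lia|].
  inversion Hover as [|? ? _ Hp]; subst.
  destruct o; cbn in Hwf.
  1, 2: destruct Hwf as [-> Hwf]; specialize (IH Hp false Hwf);
        pose proof (bar_prefix_length Sc p Hp Hwf); cbn in *; lia.
  - destruct Hwf as [-> Hwf]. specialize (IH Hp true Hwf). cbn in *; lia.
  - destruct Hwf as (-> & Hwf & _). specialize (IH Hp false Hwf). cbn in *; lia.
Qed.

Lemma addr_ok_length Sc M world p :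
  addr_ok Sc M world p -> length p <= S M * (length Sc * length Sc + 2).
Proof.
  intros (Hwf & Hover & Hdepth).
  pose proof (addr_wf_length Sc p Hover world Hwf).
  destruct world.
  - nia.
  - pose proof (bar_prefix_length Sc p Hover Hwf). nia.
Qed.

Fixpoint lists_upto {T} (alphabet : list T) (n : nat) : list (list T) :=
  match n with
  | 0 => [[]]
  | S n => [] :: flat_map (fun t => map (cons t) (lists_upto alphabet n)) alphabet
  end.

Lemma in_lists_upto {T} (alphabet : list T) n p :
  length p <= n -> incl p alphabet -> In p (lists_upto alphabet n).
Proof.
  revert p; induction n as [|n IH]; intros [|t p] Hlen Hincl; cbn in *; auto; try lia.
  right. apply in_flat_map. exists t. split; [apply Hincl; left; auto|].
  apply in_map, IH; [lia | eapply incl_cons_inv; eauto].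
Qed.

Definition origins (Sc : list formula) : list origin :=
  map ORall Sc ++ map OLex Sc
  ++ map (fun AB => ORcnd (fst AB) (snd AB)) (list_prod Sc Sc)
  ++ map (fun AB => OLbar (fst AB) (snd AB)) (list_prod Sc Sc).

Lemma in_origins Sc o : origin_over Sc o -> In o (origins Sc).
Proof.
  unfold origins; destruct o; cbn; intros Ho; rewrite !in_app_iff.
  - left; apply in_map; auto.
  - right; left; apply in_map; auto.
  - right; right; left. apply in_map_iff. exists (A, B). split; auto. apply in_prod; tauto.
  - right; right; right. apply in_map_iff. exists (A, B). split; auto. apply in_prod; tauto.
Qed.

Definition addresses (Sc : list formula) (M : nat) : list address :=
  lists_upto (origins Sc) (S M * (length Sc * length Sc + 2)).

Lemma in_addresses Sc M world p : addr_ok Sc M world p -> In p (addresses Sc M).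
Proof.
  intros Hok. apply in_lists_upto; [eapply addr_ok_length; eauto|].
  intros o Ho. apply in_origins. destruct Hok as (_ & Hover & _).
  rewrite Forall_forall in Hover; auto.
Qed.

(** * The search invariant *)

Definition seen (H : list sequent) (G D : list lform) (f : lform) : Prop :=
  dA H G f \/ dS H D f.

Lemma dA_cons H G D G' f : dA ((G, D) :: H) G' f <-> In f G' \/ dA H G f.
Proof.
  unfold dA; split.
  - intros [Hf | (S & [<- | HS] & Hf)]; auto. right; right; eauto.
  - intros [Hf | [Hf | (S & HS & Hf)]]; auto; right; [exists (G, D) | exists S]; cbn; auto.
Qed.

Lemma dS_cons H G D D' f : dS ((G, D) :: H) D' f <-> In f D' \/ dS H D f.
Proof.
  unfold dS; split.
  - intros [Hf | (S & [<- | HS] & Hf)]; auto. right; right; eauto.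
  - intros [Hf | [Hf | (S & HS & Hf)]]; auto; right; [exists (G, D) | exists S]; cbn; auto.
Qed.

Lemma dA_old H G D G' f : dA H G f -> dA ((G, D) :: H) G' f.
Proof. intros; apply dA_cons; auto. Qed.

Lemma dS_old H G D D' f : dS H D f -> dS ((G, D) :: H) D' f.
Proof. intros; apply dS_cons; auto. Qed.

Lemma dA_new H G D G' f : In f G' -> dA ((G, D) :: H) G' f.
Proof. intros; apply dA_cons; auto. Qed.

Lemma dS_new H G D D' f : In f D' -> dS ((G, D) :: H) D' f.
Proof. intros; apply dS_cons; auto. Qed.

(* No rule removes these formulas from the antecedent, respectively the succedent. *)
Definition kept_left (f : lform) : Prop :=
  match f with InN _ _ | Mem _ _ | Sub _ _ | FAll _ _ => True | _ => False end.

Definition kept_right (f : lform) : Prop :=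
  match f with FEx _ _ | FCnd _ _ _ _ => True | _ => False end.

(* What the rule with principal formula [f] establishes once it has been applied. *)
Definition done_left (H : list sequent) (G D : list lform) (f : lform) : Prop :=
  match f with
  | Lab x (And A B) => dA H G (Lab x A) /\ dA H G (Lab x B)
  | Lab x (Or A B) => dA H G (Lab x A) \/ dA H G (Lab x B)
  | Lab x (Imp A B) => dA H G (Lab x B) \/ dS H D (Lab x A)
  | FEx a A => exists x, In (Mem x a) G /\ dA H G (Lab x A)
  | FCnd x a A B =>
      exists c, In (InN c x) G /\ In (Sub c a) G /\ dA H G (FEx c A) /\ In (FAll c (Imp A B)) G
  | _ => True
  end.

Definition done_right (H : list sequent) (G D : list lform) (f : lform) : Prop :=
  match f with
  | Lab x (And A B) => dS H D (Lab x A) \/ dS H D (Lab x B)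
  | Lab x (Or A B) => dS H D (Lab x A) /\ dS H D (Lab x B)
  | Lab x (Cnd A B) => exists a, In (InN a x) G /\ dA H G (FEx a A) /\ In (FCnd x a A B) D
  | FAll a A => exists x, In (Mem x a) G /\ dS H D (Lab x A)
  | _ => True
  end.

Lemma done_left_old H G D G' D' f :
  (forall g, In g G -> kept_left g -> In g G') ->
  done_left H G D f -> done_left ((G, D) :: H) G' D' f.
Proof.
  intros Hkept. destruct f as [| | |x A| | |x a A B]; cbn; auto.
  - destruct A; cbn; auto; intros Hd.
    + destruct Hd; split; apply dA_old; auto.
    + destruct Hd; [left | right]; apply dA_old; auto.
    + destruct Hd; [left; apply dA_old | right; apply dS_old]; auto.
  - intros (x & Hm & Hx). exists x. split; [apply Hkept; cbn; auto | apply dA_old; auto].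
  - intros (c & H1 & H2 & H3 & H4). exists c.
    repeat split; try (apply Hkept; cbn; auto). apply dA_old; auto.
Qed.

Lemma done_right_old H G D G' D' f :
  (forall g, In g G -> kept_left g -> In g G') ->
  (forall g, In g D -> kept_right g -> In g D') ->
  done_right H G D f -> done_right ((G, D) :: H) G' D' f.
Proof.
  intros HkeptL HkeptR. destruct f as [| | |x A| |a A|]; cbn; auto.
  - destruct A; cbn; auto; intros Hd.
    + destruct Hd; [left | right]; apply dS_old; auto.
    + destruct Hd; split; apply dS_old; auto.
    + destruct Hd as (a & H1 & H2 & H3). exists a.
      repeat split; [apply HkeptL | apply dA_old | apply HkeptR]; cbn; auto.
  - intros (x & Hm & Hx). exists x. split; [apply HkeptL; cbn; auto | apply dS_old; auto].
Qed.

Definition labels_occur (f : lform) (G D : list lform) : Prop :=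
  (forall x, In x (wlabs f) -> occW x G D) /\ (forall a, In a (nlabs f) -> occN a G D).

Lemma labels_occur_in f G D : In f G \/ In f D -> labels_occur f G D.
Proof. intros Hf. split; intros; [exists f | exists f]; auto. Qed.

Definition lform_over (Sc : list formula) (f : lform) : Prop :=
  match f with
  | Lab _ F | FEx _ F | FAll _ F => In F Sc
  | FCnd _ _ A B => In (Cnd A B) Sc
  | _ => True
  end.

(* Along an address, each world-creating step consumes one level of conditional nesting;
   hence world depths are at most [cnd_depth A0]. *)
Definition levelled (M : nat) (aw an : nat -> address) (f : lform) : Prop :=
  match f with
  | InN a x => world_depth (an a) = world_depth (aw x)
  | Mem x a => world_depth (aw x) = S (world_depth (an a))
  | Sub a b => world_depth (an a) = world_depth (an b)
  | Lab x F => cnd_depth F + world_depth (aw x) <= M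
  | FEx a F | FAll a F => S (cnd_depth F + world_depth (an a)) <= M
  | FCnd x a A B => cnd_depth (Cnd A B) + world_depth (aw x) <= M
  end.

Lemma levelled_agree M aw an aw' an' f :
  (forall x, In x (wlabs f) -> aw' x = aw x) ->
  (forall a, In a (nlabs f) -> an' a = an a) ->
  levelled M aw an f -> levelled M aw' an' f.
Proof.
  destruct f; cbn; intros Hw Hn;
    repeat match goal with
    | |- context [aw' ?x] => rewrite (Hw x) by auto
    | |- context [an' ?a] => rewrite (Hn a) by auto
    end; auto.
Qed.

Definition world_origin (H : list sequent) (G D : list lform) (aw an : nat -> address)
    (x : wlabel) : Prop :=
  aw x = [] \/
  (exists A a, aw x = ORall A :: an a /\ In (Mem x a) G /\ dS H D (Lab x A)) \/
  (exists A a, aw x = OLex A :: an a /\ In (Mem x a) G /\ dA H G (Lab x A)).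

Definition nbhd_origin (H : list sequent) (G D : list lform) (aw an : nat -> address)
    (a : nlabel) : Prop :=
  (exists A B x, an a = ORcnd A B :: aw x /\ In (InN a x) G /\ dA H G (FEx a A)
                 /\ In (FCnd x a A B) D) \/
  (exists A B b x, an a = OLbar A B :: an b /\ In (InN a x) G /\ In (Sub a b) G
                   /\ In (InN b x) G /\ dA H G (FEx a A) /\ In (FAll a (Imp A B)) G).

Lemma world_origin_old H G D G' D' aw an aw' an' x :
  (forall g, In g G -> kept_left g -> In g G') ->
  (forall y, occW y G D -> aw' y = aw y) ->
  (forall a, occN a G D -> an' a = an a) ->
  occW x G D ->
  world_origin H G D aw an x -> world_origin ((G, D) :: H) G' D' aw' an' x.
Proof.
  intros Hkept Hw Hn Hx Horig. unfold world_origin. rewrite (Hw x Hx).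
  destruct Horig as [E | [(A & a & E & Hm & HA) | (A & a & E & Hm & HA)]];
    [left; auto | right | right];
    [left | right]; exists A, a; rewrite (Hn a) by (exists (Mem x a); cbn; auto);
    repeat split; auto using dA_old, dS_old; apply Hkept; cbn; auto.
Qed.

Lemma nbhd_origin_old H G D G' D' aw an aw' an' a :
  (forall g, In g G -> kept_left g -> In g G') ->
  (forall g, In g D -> kept_right g -> In g D') ->
  (forall y, occW y G D -> aw' y = aw y) ->
  (forall b, occN b G D -> an' b = an b) ->
  occN a G D ->
  nbhd_origin H G D aw an a -> nbhd_origin ((G, D) :: H) G' D' aw' an' a.
Proof.
  intros HkeptL HkeptR Hw Hn Ha Horig. unfold nbhd_origin. rewrite (Hn a Ha).
  destruct Horig as [(A & B & x & E & H1 & H2 & H3) | (A & B & b & x & E & H1 & H2 & H3 & H4 & H5)].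
  - left; exists A, B, x. rewrite (Hw x) by (exists (InN a x); cbn; auto).
    repeat split; auto using dA_old; [apply HkeptL | apply HkeptR]; cbn; auto.
  - right; exists A, B, b, x. rewrite (Hn b) by (exists (Sub a b); cbn; auto).
    repeat split; auto using dA_old; apply HkeptL; cbn; auto.
Qed.

Record search_inv (A0 : formula) (H : list sequent) (G D : list lform)
    (aw an : nat -> address) : Prop := {
  kept_left_stays : forall f, dA H G f -> kept_left f -> In f G;
  kept_right_stays : forall f, dS H D f -> kept_right f -> In f D;
  seen_labels_occur : forall f, seen H G D f -> labels_occur f G D;
  seen_over : forall f, seen H G D f -> lform_over (subformulas A0) f;
  seen_levelled : forall f, seen H G D f -> levelled (cnd_depth A0) aw an f;
  left_done : forall f, dA H G f -> In f G \/ done_left H G D f;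
  right_done : forall f, dS H D f -> In f D \/ done_right H G D f;
  bar_anchored : forall x a A B, dA H G (FCnd x a A B) -> In (InN a x) G /\ dA H G (FEx a A);
  nbhd_owner_unique : forall a x y, In (InN a x) G -> In (InN a y) G -> x = y;
  world_addr_inj : forall x y, occW x G D -> occW y G D -> aw x = aw y -> x = y;
  nbhd_addr_inj : forall a b, occN a G D -> occN b G D -> an a = an b -> a = b;
  world_addr_ok : forall x, occW x G D ->
    world_origin H G D aw an x /\ addr_ok (subformulas A0) (cnd_depth A0) true (aw x);
  nbhd_addr_ok : forall a, occN a G D ->
    nbhd_origin H G D aw an a /\ addr_ok (subformulas A0) (cnd_depth A0) false (an a)
}.

Definition placed (A0 : formula) (aw an : nat -> address) (G D : list lform) (f : lform) : Prop :=
  lform_over (subformulas A0) f /\ levelled (cnd_depth A0) aw an f /\ labels_occur f G D.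

Lemma seen_placed A0 H G D aw an f :
  search_inv A0 H G D aw an -> seen H G D f -> placed A0 aw an G D f.
Proof.
  intros inv Hf. repeat split; try apply (seen_labels_occur _ _ _ _ _ _ inv f Hf).
  - apply (seen_over _ _ _ _ _ _ inv f Hf).
  - apply (seen_levelled _ _ _ _ _ _ inv f Hf).
Qed.

Definition removable_left (H : list sequent) (G D G' D' : list lform) (p : lform) : Prop :=
  ~ kept_left p /\ labels_occur p G' D' /\ done_left ((G, D) :: H) G' D' p.

Definition removable_right (H : list sequent) (G D G' D' : list lform) (p : lform) : Prop :=
  ~ kept_right p /\ labels_occur p G' D' /\ done_right ((G, D) :: H) G' D' p.

Lemma root_search_inv A0 x0 :
  search_inv A0 [] [] [Lab x0 A0] (fun _ => []) (fun _ => []).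
Proof.
  assert (HdA : forall f, ~ dA [] [] f) by (intros f [[] | (S & [] & _)]).
  assert (HdS : forall f, dS [] [Lab x0 A0] f -> f = Lab x0 A0)
    by (intros f [[<- | []] | (S & [] & _)]; auto).
  assert (Hseen : forall f, seen [] [] [Lab x0 A0] f -> f = Lab x0 A0)
    by (intros f [Hf | Hf]; [exfalso; eapply HdA; eauto | auto]).
  assert (HoccW : forall x, occW x [] [Lab x0 A0] -> x = x0)
    by (intros x (f & [[] | [<- | []]] & [<- | []]); auto).
  assert (HoccN : forall a, ~ occN a [] [Lab x0 A0])
    by (intros a (f & [[] | [<- | []]] & [])).
  constructor; intros.
  all: repeat match goal with
       | Hf : dA [] [] _ |- _ => destruct (HdA _ Hf)
       | Hf : seen _ _ _ _ |- _ => apply Hseen in Hf; subst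
       | Hf : dS _ _ _ |- _ => apply HdS in Hf; subst
       | Ha : occN _ _ _ |- _ => destruct (HoccN _ Ha)
       | Hx : occW _ _ _ |- _ => apply HoccW in Hx; subst
       end; cbn in *; try tauto.
  - apply labels_occur_in; right; left; auto.
  - apply subformulas_refl.
  - lia.
  - split; [left; auto | repeat split; [apply Forall_nil | cbn; lia]].
Qed.

(** * Preservation of the invariant by the rules *)

(* A rule application rewrites [G = pG ++ cG] into [G' = nG ++ cG], removing the principal
   formulas [pG] and adding [nG], and likewise for [D]; the address maps [aw], [an] become
   [aw'], [an'], which may differ only on fresh labels. *)
Section Frame.

Variables (A0 : formula) (H : list sequent) (G D G' D' : list lform)
  (pG pD nG nD cG cD : list lform) (aw an aw' an' : nat -> address).

Hypothesis inv : search_inv A0 H G D aw an.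

Hypotheses (PG : Permutation G (pG ++ cG)) (PG' : Permutation G' (nG ++ cG))
  (PD : Permutation D (pD ++ cD)) (PD' : Permutation D' (nD ++ cD)).

Hypothesis removed_left : Forall (removable_left H G D G' D') pG.
Hypothesis removed_right : Forall (removable_right H G D G' D') pD.

Hypothesis added_ok : forall f, In f (nG ++ nD) ->
  lform_over (subformulas A0) f /\ levelled (cnd_depth A0) aw' an' f.
Hypothesis added_bar_anchored : forall x a A B, In (FCnd x a A B) nG ->
  In (InN a x) G' /\ dA ((G, D) :: H) G' (FEx a A).
Hypothesis new_owner_unique : forall a x y, In (InN a x) G' -> In (InN a y) G' -> x = y.

Hypotheses (aw_old : forall x, occW x G D -> aw' x = aw x)
  (an_old : forall a, occN a G D -> an' a = an a).

Hypothesis new_world : forall x, occW x G' D' -> ~ occW x G D ->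
  world_origin ((G, D) :: H) G' D' aw' an' x
  /\ addr_ok (subformulas A0) (cnd_depth A0) true (aw' x)
  /\ (forall y, occW y G' D' -> aw' y = aw' x -> y = x).
Hypothesis new_nbhd : forall a, occN a G' D' -> ~ occN a G D ->
  nbhd_origin ((G, D) :: H) G' D' aw' an' a
  /\ addr_ok (subformulas A0) (cnd_depth A0) false (an' a)
  /\ (forall b, occN b G' D' -> an' b = an' a -> b = a).

Lemma in_old_left f : In f G -> In f G' \/ In f pG.
Proof.
  intros Hf. apply (Permutation_in f PG), in_app_or in Hf as [Hf | Hf]; auto.
  left. apply (Permutation_in f (Permutation_sym PG')), in_or_app; auto.
Qed.

Lemma in_old_right f : In f D -> In f D' \/ In f pD.
Proof.
  intros Hf. apply (Permutation_in f PD), in_app_or in Hf as [Hf | Hf]; auto.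
  left. apply (Permutation_in f (Permutation_sym PD')), in_or_app; auto.
Qed.

Lemma in_new_left f : In f G' -> In f G \/ In f nG.
Proof.
  intros Hf. apply (Permutation_in f PG'), in_app_or in Hf as [Hf | Hf]; auto.
  left. apply (Permutation_in f (Permutation_sym PG)), in_or_app; auto.
Qed.

Lemma in_new_right f : In f D' -> In f D \/ In f nD.
Proof.
  intros Hf. apply (Permutation_in f PD'), in_app_or in Hf as [Hf | Hf]; auto.
  left. apply (Permutation_in f (Permutation_sym PD)), in_or_app; auto.
Qed.

Lemma kept_left_in_new g : In g G -> kept_left g -> In g G'.
Proof.
  intros Hg Hk. destruct (in_old_left g Hg) as [? | Hp]; auto.
  pose proof (proj1 (Forall_forall _ _) removed_left) as Hrem. destruct (Hrem g Hp); contradiction.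
Qed.

Lemma kept_right_in_new g : In g D -> kept_right g -> In g D'.
Proof.
  intros Hg Hk. destruct (in_old_right g Hg) as [? | Hp]; auto.
  pose proof (proj1 (Forall_forall _ _) removed_right) as Hrem'.
  destruct (Hrem' g Hp); contradiction.
Qed.

Lemma labels_occur_new f : In f G \/ In f D -> labels_occur f G' D'.
Proof.
  pose proof (proj1 (Forall_forall _ _) removed_left) as Hrem.
  pose proof (proj1 (Forall_forall _ _) removed_right) as Hrem'.
  intros [Hf | Hf];
    [destruct (in_old_left f Hf) as [Hf' | Hp] | destruct (in_old_right f Hf) as [Hf' | Hp]].
  - apply labels_occur_in; auto.
  - exact (proj1 (proj2 (Hrem f Hp))).
  - apply labels_occur_in; auto.
  - exact (proj1 (proj2 (Hrem' f Hp))).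
Qed.

Lemma occW_new x : occW x G D -> occW x G' D'.
Proof. intros (f & Hf & Hx). apply (labels_occur_new f Hf). auto. Qed.

Lemma occN_new a : occN a G D -> occN a G' D'.
Proof. intros (f & Hf & Ha). apply (labels_occur_new f Hf). auto. Qed.

Lemma labels_occur_old f : placed A0 aw an G D f -> labels_occur f G' D'.
Proof. intros (_ & _ & Hw & Hn). split; intros; auto using occW_new, occN_new. Qed.

Lemma seen_new f :
  seen ((G, D) :: H) G' D' f -> (In f G \/ In f D) \/ In f (nG ++ nD) \/ seen H G D f.
Proof.
  unfold seen. rewrite dA_cons, dS_cons. rewrite in_app_iff.
  intros [[Hf | Hf] | [Hf | Hf]]; auto.
  - destruct (in_new_left f Hf); auto.
  - destruct (in_new_right f Hf); auto.
Qed.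

Lemma seen_old_placed f : (In f G \/ In f D) \/ seen H G D f ->
  placed A0 aw an G D f.
Proof.
  intros Hf. apply (seen_placed _ H); auto.
  destruct Hf as [[Hf | Hf] | Hf]; [left; left | right; left | ]; auto.
Qed.

Lemma frame_left_done f :
  dA ((G, D) :: H) G' f -> In f G' \/ done_left ((G, D) :: H) G' D' f.
Proof.
  pose proof (proj1 (Forall_forall _ _) removed_left) as Hrem.
  rewrite dA_cons. intros [Hf | Hf]; auto.
  destruct (left_done _ _ _ _ _ _ inv f Hf) as [Hg | Hd].
  - destruct (in_old_left f Hg) as [Hg' | Hp]; auto.
    right; destruct (Hrem f Hp) as (_ & _ & Hdone); exact Hdone.
  - right; apply done_left_old; auto using kept_left_in_new.
Qed.

Lemma frame_right_done f :
  dS ((G, D) :: H) D' f -> In f D' \/ done_right ((G, D) :: H) G' D' f.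
Proof.
  pose proof (proj1 (Forall_forall _ _) removed_right) as Hrem'.
  rewrite dS_cons. intros [Hf | Hf]; auto.
  destruct (right_done _ _ _ _ _ _ inv f Hf) as [Hd | Hd].
  - destruct (in_old_right f Hd) as [Hd' | Hp]; auto.
    right; destruct (Hrem' f Hp) as (_ & _ & Hdone); exact Hdone.
  - right; apply done_right_old; auto using kept_left_in_new, kept_right_in_new.
Qed.

Lemma frame_bar_anchored x a A B : dA ((G, D) :: H) G' (FCnd x a A B) ->
  In (InN a x) G' /\ dA ((G, D) :: H) G' (FEx a A).
Proof.
  intros Hf. assert (Hold : dA H G (FCnd x a A B) ->
                           In (InN a x) G' /\ dA ((G, D) :: H) G' (FEx a A)).
  { intros Ho. destruct (bar_anchored _ _ _ _ _ _ inv x a A B Ho).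
    split; [apply kept_left_in_new; cbn | apply dA_old]; auto. }
  apply dA_cons in Hf as [Hf | Hf]; [| exact (Hold Hf)].
  destruct (in_new_left _ Hf) as [Hg | Hn].
  - apply Hold; left; exact Hg.
  - exact (added_bar_anchored x a A B Hn).
Qed.

Lemma frame_world_addr_inj x y :
  occW x G' D' -> occW y G' D' -> aw' x = aw' y -> x = y.
Proof.
  intros Hx Hy E.
  destruct (classic (occW x G D)) as [Ox | Ox];
    [| symmetry; apply (new_world x Hx Ox); auto].
  destruct (classic (occW y G D)) as [Oy | Oy]; [| apply (new_world y Hy Oy); auto].
  rewrite (aw_old x Ox), (aw_old y Oy) in E. apply (world_addr_inj _ _ _ _ _ _ inv); auto.
Qed.

Lemma frame_nbhd_addr_inj a b :
  occN a G' D' -> occN b G' D' -> an' a = an' b -> a = b.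
Proof.
  intros Ha Hb E.
  destruct (classic (occN a G D)) as [Oa | Oa];
    [| symmetry; apply (new_nbhd a Ha Oa); auto].
  destruct (classic (occN b G D)) as [Ob | Ob]; [| apply (new_nbhd b Hb Ob); auto].
  rewrite (an_old a Oa), (an_old b Ob) in E. apply (nbhd_addr_inj _ _ _ _ _ _ inv); auto.
Qed.

Lemma frame_search_inv : search_inv A0 ((G, D) :: H) G' D' aw' an'.
Proof.
  constructor.
  - intros f Hf Hk. apply dA_cons in Hf as [Hf | Hf]; auto.
    apply kept_left_in_new; auto. apply (kept_left_stays _ _ _ _ _ _ inv); auto.
  - intros f Hf Hk. apply dS_cons in Hf as [Hf | Hf]; auto.
    apply kept_right_in_new; auto. apply (kept_right_stays _ _ _ _ _ _ inv); auto.
  - intros f Hf. unfold seen in Hf. rewrite dA_cons, dS_cons in Hf.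
    destruct Hf as [[Hf | Hf] | [Hf | Hf]]; auto using labels_occur_in.
    + apply labels_occur_old. apply seen_old_placed; right; left; exact Hf.
    + apply labels_occur_old. apply seen_old_placed; right; right; exact Hf.
  - intros f Hf. destruct (seen_new f Hf) as [Ho | [Hn | Ho]];
      [| exact (proj1 (added_ok f Hn)) |]; exact (proj1 (seen_old_placed f ltac:(auto))).
  - intros f Hf. destruct (seen_new f Hf) as [Ho | [Hn | Ho]]; [| exact (proj2 (added_ok f Hn)) |];
      destruct (seen_old_placed f ltac:(auto)) as (_ & Hl & Hw & Hn);
      apply (levelled_agree _ aw an); auto.
  - exact frame_left_done.
  - exact frame_right_done.
  - exact frame_bar_anchored.
  - exact new_owner_unique.
  - exact frame_world_addr_inj.
  - exact frame_nbhd_addr_inj.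
  - intros x Hx. destruct (classic (occW x G D)) as [Ox | Ox];
      [| destruct (new_world x Hx Ox) as (? & ? & _); auto].
    destruct (world_addr_ok _ _ _ _ _ _ inv x Ox) as [Horig Hok].
    rewrite (aw_old x Ox). split; auto.
    eapply world_origin_old; eauto using kept_left_in_new.
  - intros a Ha. destruct (classic (occN a G D)) as [Oa | Oa];
      [| destruct (new_nbhd a Ha Oa) as (? & ? & _); auto].
    destruct (nbhd_addr_ok _ _ _ _ _ _ inv a Oa) as [Horig Hok].
    rewrite (an_old a Oa). split; auto.
    eapply nbhd_origin_old; eauto using kept_left_in_new, kept_right_in_new.
Qed.

End Frame.

Lemma owner_unique_step G G' pG nG cG :
  Permutation G (pG ++ cG) -> Permutation G' (nG ++ cG) -> (forall a x, ~ In (InN a x) nG) ->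
  (forall a x y, In (InN a x) G -> In (InN a y) G -> x = y) ->
  forall a x y, In (InN a x) G' -> In (InN a y) G' -> x = y.
Proof.
  intros PG PG' HnoN Huniq a x y Hx Hy.
  destruct (in_new_left G G' pG nG cG PG PG' _ Hx) as [Hx' | Hx']; [| exfalso; eapply HnoN; eauto].
  destruct (in_new_left G G' pG nG cG PG PG' _ Hy) as [Hy' | Hy']; [| exfalso; eapply HnoN; eauto].
  eauto.
Qed.

Lemma static_step A0 H G D G' D' pG pD nG nD cG cD aw an :
  search_inv A0 H G D aw an ->
  Permutation G (pG ++ cG) -> Permutation G' (nG ++ cG) ->
  Permutation D (pD ++ cD) -> Permutation D' (nD ++ cD) ->
  Forall (removable_left H G D G' D') pG -> Forall (removable_right H G D G' D') pD ->
  Forall (placed A0 aw an G D) (nG ++ nD) ->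
  (forall x a A B, In (FCnd x a A B) nG ->
     In (InN a x) G' /\ dA ((G, D) :: H) G' (FEx a A)) ->
  (forall a x, ~ In (InN a x) nG) ->
  search_inv A0 ((G, D) :: H) G' D' aw an.
Proof.
  intros inv PG PG' PD PD' Hpl Hpr Hadded Hanch HnoN.
  rewrite Forall_forall in Hadded.
  assert (Hold : forall f, In f G' \/ In f D' -> placed A0 aw an G D f).
  { intros f [Hf | Hf].
    - destruct (in_new_left G G' pG nG cG PG PG' f Hf) as [Ho | Hn];
        [apply (seen_placed _ H _ _ _ _ _ inv); left; left | apply Hadded, in_or_app]; auto.
    - destruct (in_new_right D D' pD nD cD PD PD' f Hf) as [Ho | Hn];
        [apply (seen_placed _ H _ _ _ _ _ inv); right; left | apply Hadded, in_or_app]; auto. }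
  assert (HoccW : forall x, occW x G' D' -> occW x G D).
  { intros x (f & Hf & Hx). destruct (Hold f Hf) as (_ & _ & Hw & _); auto. }
  assert (HoccN : forall a, occN a G' D' -> occN a G D).
  { intros a (f & Hf & Ha). destruct (Hold f Hf) as (_ & _ & _ & Hn); auto. }
  eapply frame_search_inv with (pG := pG) (pD := pD) (nG := nG) (nD := nD) (cG := cG) (cD := cD);
    eauto.
  - intros f Hf. destruct (Hadded f Hf) as (? & ? & _); auto.
  - apply (owner_unique_step G G' pG nG cG PG PG' HnoN), (nbhd_owner_unique _ _ _ _ _ _ inv).
  - intros x Hx Hn. exfalso; auto.
  - intros a Ha Hn. exfalso; auto.
Qed.

Definition adds_new (H : list sequent) (G D G' D' : list lform) : Prop :=
  (exists f, In f G' /\ ~ dA H G f) \/ (exists f, In f D' /\ ~ dS H D f).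

Lemma labels_occur_via f g G D :
  In g G \/ In g D -> incl (wlabs f) (wlabs g) -> incl (nlabs f) (nlabs g) ->
  labels_occur f G D.
Proof. intros Hg Hw Hn. split; intros; [exists g | exists g]; auto. Qed.

Ltac in_perm :=
  match goal with
  | P : Permutation ?L _ |- In _ ?L =>
      apply (Permutation_in _ (Permutation_sym P)); cbn; solve [auto]
  end.

Ltac occurs_via g :=
  apply (labels_occur_via _ g);
    [solve [left; assumption | right; assumption | in_perm | left; in_perm | right; in_perm]
    | intros ? ?; cbn in *; tauto ..].

Ltac placed_from :=
  repeat match goal with
  | P : placed _ _ _ _ _ _ |- _ => destruct P as (? & ? & [? ?]); cbn [lform_over] in *
  end;
  try match goal with
  | Hc : In (Cnd _ _) (subformulas _) |- _ => destruct (subformulas_Cnd _ _ _ Hc) as (? & ? & ?)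
  end;
  split; [cbn in *; auto | split; [cbn in *; lia | split]];
  let Hy := fresh in
  intros ? Hy; cbn in *; repeat destruct Hy as [<- | Hy]; try contradiction; auto.

Ltac split_Forall := repeat apply Forall_cons; try apply Forall_nil.
Ltac no_anchor := intros ? ? ? ? Hin; cbn in Hin; intuition discriminate.
Ltac no_InN := intros ? ? Hin; cbn in Hin; intuition discriminate.

Lemma placed_component A0 aw an G D x F F' :
  placed A0 aw an G D (Lab x F) -> In F' (subformulas F) -> cnd_depth F' <= cnd_depth F ->
  placed A0 aw an G D (Lab x F').
Proof.
  intros (Hover & Hlev & Hlab) HF' Hdepth. repeat split; try apply Hlab.
  - eapply subformulas_trans; eauto.
  - cbn in *; lia.
Qed.

Ltac placed_components :=
  split_Forall; eapply placed_component; eauto; cbn; auto using in_or_app, subformulas_refl; lia.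

Section StaticRules.

Variables (A0 : formula) (H : list sequent) (G D : list lform) (aw an : nat -> address).
Hypothesis inv : search_inv A0 H G D aw an.

Notation static_result G' D' :=
  (search_inv A0 ((G, D) :: H) G' D' aw an /\ adds_new H G D G' D').

Lemma placed_left f : In f G -> placed A0 aw an G D f.
Proof. intros Hf. apply (seen_placed _ H _ _ _ _ _ inv). left; left; exact Hf. Qed.

Lemma placed_right f : In f D -> placed A0 aw an G D f.
Proof. intros Hf. apply (seen_placed _ H _ _ _ _ _ inv). right; left; exact Hf. Qed.

Lemma kept_left_unseen f : kept_left f -> ~ In f G -> ~ dA H G f.
Proof. intros Hk Hf Hd. apply Hf, (kept_left_stays _ _ _ _ _ _ inv); auto. Qed.

Lemma Land_step x A B ctx G' D' :
  Permutation G (Lab x (And A B) :: ctx) -> ~ sLand H G x A B ->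
  Permutation G' (Lab x A :: Lab x B :: ctx) -> Permutation D' D ->
  static_result G' D'.
Proof.
  intros PG Hsat PG' PD'.
  assert (Hp : placed A0 aw an G D (Lab x (And A B))) by (apply placed_left; in_perm).
  split.
  - apply (static_step A0 H G D G' D' [Lab x (And A B)] [] [Lab x A; Lab x B] [] ctx D);
      auto using Permutation_refl; try no_anchor; try no_InN; try apply Forall_nil.
    + split_Forall. split; [cbn; tauto | split; [occurs_via (Lab x A) |]].
      cbn; split; apply dA_new; in_perm.
    + placed_components.
  - left. destruct (classic (dA H G (Lab x A))) as [HA | HA].
    + exists (Lab x B). split; [in_perm | intros HB; apply Hsat; intros _; auto].
    + exists (Lab x A). split; [in_perm | exact HA].
Qed.

Lemma Rand_step x A B C ctx G' D' :
  Permutation D (Lab x (And A B) :: ctx) -> C = A \/ C = B -> ~ sRand H D x A B ->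
  Permutation G' G -> Permutation D' (Lab x C :: ctx) ->
  static_result G' D'.
Proof.
  intros PD HC Hsat PG' PD'.
  assert (Hp : placed A0 aw an G D (Lab x (And A B))) by (apply placed_right; in_perm).
  split.
  - apply (static_step A0 H G D G' D' [] [Lab x (And A B)] [] [Lab x C] G ctx);
      auto using Permutation_refl; try no_anchor; try no_InN; try apply Forall_nil.
    + split_Forall. split; [cbn; tauto | split; [occurs_via (Lab x C) |]].
      destruct HC as [-> | ->]; [left | right]; apply dS_new; in_perm.
    + destruct HC as [-> | ->]; placed_components.
  - right. exists (Lab x C). split; [in_perm |].
    intros HC'; apply Hsat; intros _; destruct HC as [-> | ->]; auto.
Qed.

Lemma Lor_step x A B C ctx G' D' :
  Permutation G (Lab x (Or A B) :: ctx) -> C = A \/ C = B -> ~ sLor H G x A B ->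
  Permutation G' (Lab x C :: ctx) -> Permutation D' D ->
  static_result G' D'.
Proof.
  intros PG HC Hsat PG' PD'.
  assert (Hp : placed A0 aw an G D (Lab x (Or A B))) by (apply placed_left; in_perm).
  split.
  - apply (static_step A0 H G D G' D' [Lab x (Or A B)] [] [Lab x C] [] ctx D);
      auto using Permutation_refl; try no_anchor; try no_InN; try apply Forall_nil.
    + split_Forall. split; [cbn; tauto | split; [occurs_via (Lab x C) |]].
      destruct HC as [-> | ->]; [left | right]; apply dA_new; in_perm.
    + destruct HC as [-> | ->]; placed_components.
  - left. exists (Lab x C). split; [in_perm |].
    intros HC'; apply Hsat; intros _; destruct HC as [-> | ->]; auto.
Qed.

Lemma Ror_step x A B ctx G' D' :
  Permutation D (Lab x (Or A B) :: ctx) -> ~ sRor H D x A B ->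
  Permutation G' G -> Permutation D' (Lab x A :: Lab x B :: ctx) ->
  static_result G' D'.
Proof.
  intros PD Hsat PG' PD'.
  assert (Hp : placed A0 aw an G D (Lab x (Or A B))) by (apply placed_right; in_perm).
  split.
  - apply (static_step A0 H G D G' D' [] [Lab x (Or A B)] [] [Lab x A; Lab x B] G ctx);
      auto using Permutation_refl; try no_anchor; try no_InN; try apply Forall_nil.
    + split_Forall. split; [cbn; tauto | split; [occurs_via (Lab x A) |]].
      cbn; split; apply dS_new; in_perm.
    + placed_components.
  - right. destruct (classic (dS H D (Lab x A))) as [HA | HA].
    + exists (Lab x B). split; [in_perm | intros HB; apply Hsat; intros _; auto].
    + exists (Lab x A). split; [in_perm | exact HA].
Qed.

Lemma Limp_step_left x A B ctx G' D' :
  Permutation G (Lab x (Imp A B) :: ctx) -> ~ sLimp H G D x A B ->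
  Permutation G' ctx -> Permutation D' (Lab x A :: D) ->
  static_result G' D'.
Proof.
  intros PG Hsat PG' PD'.
  assert (Hp : placed A0 aw an G D (Lab x (Imp A B))) by (apply placed_left; in_perm).
  split.
  - apply (static_step A0 H G D G' D' [Lab x (Imp A B)] [] [] [Lab x A] ctx D);
      auto using Permutation_refl; try no_anchor; try no_InN; try apply Forall_nil.
    + split_Forall. split; [cbn; tauto | split; [occurs_via (Lab x A) |]].
      right; apply dS_new; in_perm.
    + placed_components.
  - right. exists (Lab x A). split; [in_perm | intros HA; apply Hsat; intros _; auto].
Qed.

Lemma Limp_step_right x A B ctx G' D' :
  Permutation G (Lab x (Imp A B) :: ctx) -> ~ sLimp H G D x A B ->
  Permutation G' (Lab x B :: ctx) -> Permutation D' D ->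
  static_result G' D'.
Proof.
  intros PG Hsat PG' PD'.
  assert (Hp : placed A0 aw an G D (Lab x (Imp A B))) by (apply placed_left; in_perm).
  split.
  - apply (static_step A0 H G D G' D' [Lab x (Imp A B)] [] [Lab x B] [] ctx D);
      auto using Permutation_refl; try no_anchor; try no_InN; try apply Forall_nil.
    + split_Forall. split; [cbn; tauto | split; [occurs_via (Lab x B) |]].
      left; apply dA_new; in_perm.
    + placed_components.
  - left. exists (Lab x B). split; [in_perm | intros HB; apply Hsat; intros _; auto].
Qed.

Lemma Rimp_step x A B ctx G' D' :
  Permutation D (Lab x (Imp A B) :: ctx) -> ~ sRimp H G D x A B ->
  Permutation G' (Lab x A :: G) -> Permutation D' (Lab x B :: ctx) ->
  static_result G' D'.
Proof.
  intros PD Hsat PG' PD'.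
  assert (Hp : placed A0 aw an G D (Lab x (Imp A B))) by (apply placed_right; in_perm).
  split.
  - apply (static_step A0 H G D G' D' [] [Lab x (Imp A B)] [Lab x A] [Lab x B] G ctx);
      auto using Permutation_refl; try no_anchor; try no_InN; try apply Forall_nil.
    + split_Forall. split; [cbn; tauto | split; [occurs_via (Lab x A) | exact I]].
    + placed_components.
  - destruct (classic (dA H G (Lab x A))) as [HA | HA].
    + right. exists (Lab x B). split; [in_perm | intros HB; apply Hsat; intros _; auto].
    + left. exists (Lab x A). split; [in_perm | exact HA].
Qed.

Lemma Lall_step x a A G' D' :
  In (Mem x a) G -> In (FAll a A) G -> ~ sLall H G x a A ->
  Permutation G' (Lab x A :: G) -> Permutation D' D ->
  static_result G' D'.
Proof.
  intros Hm Ha Hsat PG' PD'.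
  pose proof (placed_left _ Hm). pose proof (placed_left _ Ha).
  split.
  - apply (static_step A0 H G D G' D' [] [] [Lab x A] [] G D);
      auto using Permutation_refl; try no_anchor; try no_InN; try apply Forall_nil.
    split_Forall. placed_from.
  - left. exists (Lab x A). split; [in_perm | intros HA; apply Hsat; intros _ _; exact HA].
Qed.

Lemma Rex_step x a A G' D' :
  In (Mem x a) G -> In (FEx a A) D -> ~ sRex H G D x a A ->
  Permutation G' G -> Permutation D' (Lab x A :: D) ->
  static_result G' D'.
Proof.
  intros Hm Ha Hsat PG' PD'.
  pose proof (placed_left _ Hm). pose proof (placed_right _ Ha).
  split.
  - apply (static_step A0 H G D G' D' [] [] [] [Lab x A] G D);
      auto using Permutation_refl; try no_anchor; try no_InN; try apply Forall_nil.
    split_Forall. placed_from.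
  - right. exists (Lab x A). split; [in_perm | intros HA; apply Hsat; intros _ _; exact HA].
Qed.

Lemma Lcnd_step_left a x A B G' D' :
  In (InN a x) G -> In (Lab x (Cnd A B)) G -> ~ sLcnd H G D a x A B ->
  Permutation G' G -> Permutation D' (FEx a A :: D) ->
  static_result G' D'.
Proof.
  intros Hn Hc Hsat PG' PD'.
  pose proof (placed_left _ Hn). pose proof (placed_left _ Hc).
  split.
  - apply (static_step A0 H G D G' D' [] [] [] [FEx a A] G D);
      auto using Permutation_refl; try no_anchor; try no_InN; try apply Forall_nil.
    split_Forall. placed_from.
  - right. exists (FEx a A). split; [in_perm | intros HA; apply Hsat; intros _ _; auto].
Qed.

Lemma Lcnd_step_right a x A B G' D' :
  In (InN a x) G -> In (Lab x (Cnd A B)) G -> ~ sLcnd H G D a x A B ->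
  Permutation G' (FEx a A :: FCnd x a A B :: G) -> Permutation D' D ->
  static_result G' D'.
Proof.
  intros Hn Hc Hsat PG' PD'.
  pose proof (placed_left _ Hn). pose proof (placed_left _ Hc).
  split.
  - apply (static_step A0 H G D G' D' [] [] [FEx a A; FCnd x a A B] [] G D);
      auto using Permutation_refl; try no_InN; try apply Forall_nil.
    + split_Forall; placed_from.
    + intros y b C E Hin; cbn in Hin; destruct Hin as [Hin | [Hin | []]]; inversion Hin; subst.
      split; [in_perm | apply dA_new; in_perm].
  - left. destruct (classic (dA H G (FEx a A))) as [HA | HA].
    + exists (FCnd x a A B). split; [in_perm | intros HC; apply Hsat; intros _ _; auto].
    + exists (FEx a A). split; [in_perm | exact HA].
Qed.

Lemma Rbar_step_left c x a A B G' D' :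
  In (InN c x) G -> In (Sub c a) G -> In (FCnd x a A B) D -> ~ sRbar H G D c x a A B ->
  Permutation G' G -> Permutation D' (FEx c A :: D) ->
  static_result G' D'.
Proof.
  intros Hn Hs Hc Hsat PG' PD'.
  pose proof (placed_left _ Hn). pose proof (placed_right _ Hc).
  split.
  - apply (static_step A0 H G D G' D' [] [] [] [FEx c A] G D);
      auto using Permutation_refl; try no_anchor; try no_InN; try apply Forall_nil.
    split_Forall. placed_from.
  - right. exists (FEx c A). split; [in_perm |].
    intros HA; apply Hsat; intros _ _ _; left. apply (kept_right_stays _ _ _ _ _ _ inv); cbn; auto.
Qed.

Lemma Rbar_step_right c x a A B G' D' :
  In (InN c x) G -> In (Sub c a) G -> In (FCnd x a A B) D -> ~ sRbar H G D c x a A B ->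
  Permutation G' G -> Permutation D' (FAll c (Imp A B) :: D) ->
  static_result G' D'.
Proof.
  intros Hn Hs Hc Hsat PG' PD'.
  pose proof (placed_left _ Hn). pose proof (placed_right _ Hc).
  split.
  - apply (static_step A0 H G D G' D' [] [] [] [FAll c (Imp A B)] G D);
      auto using Permutation_refl; try no_anchor; try no_InN; try apply Forall_nil.
    split_Forall. placed_from.
  - right. exists (FAll c (Imp A B)). split; [in_perm | intros HA; apply Hsat; intros _ _ _; auto].
Qed.

Lemma Ref_step a G' D' :
  ~ sRef G D a -> Permutation G' (Sub a a :: G) -> Permutation D' D ->
  static_result G' D'.
Proof.
  intros Hsat PG' PD'.
  assert (Ha : occN a G D) by (apply NNPP; intros Ha; apply Hsat; intros Ha'; contradiction).
  split.
  - apply (static_step A0 H G D G' D' [] [] [Sub a a] [] G D);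
      auto using Permutation_refl; try no_anchor; try no_InN; try apply Forall_nil.
    split_Forall. split; [exact I | split; [reflexivity | split]]; intros y Hy; cbn in Hy;
      [contradiction | repeat destruct Hy as [<- | Hy]; tauto].
  - left. exists (Sub a a). split; [in_perm | apply kept_left_unseen; cbn; auto].
    intros Haa; apply Hsat; intros _; exact Haa.
Qed.

Lemma Tr_step a b c G' D' :
  In (Sub a b) G -> In (Sub b c) G -> ~ sTr G a b c ->
  Permutation G' (Sub a c :: G) -> Permutation D' D ->
  static_result G' D'.
Proof.
  intros Hab Hbc Hsat PG' PD'.
  pose proof (placed_left _ Hab). pose proof (placed_left _ Hbc).
  split.
  - apply (static_step A0 H G D G' D' [] [] [Sub a c] [] G D);
      auto using Permutation_refl; try no_anchor; try no_InN; try apply Forall_nil.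
    split_Forall. placed_from.
  - left. exists (Sub a c). split; [in_perm | apply kept_left_unseen; cbn; auto].
    intros Hac; apply Hsat; intros _ _; exact Hac.
Qed.

Lemma Lsub_step x a b G' D' :
  In (Mem x a) G -> In (Sub a b) G -> ~ sLsub G x a b ->
  Permutation G' (Mem x b :: G) -> Permutation D' D ->
  static_result G' D'.
Proof.
  intros Hm Hs Hsat PG' PD'.
  pose proof (placed_left _ Hm). pose proof (placed_left _ Hs).
  split.
  - apply (static_step A0 H G D G' D' [] [] [Mem x b] [] G D);
      auto using Permutation_refl; try no_anchor; try no_InN; try apply Forall_nil.
    split_Forall. placed_from.
  - left. exists (Mem x b). split; [in_perm | apply kept_left_unseen; cbn; auto].
    intros Hxb; apply Hsat; intros _ _; exact Hxb.
Qed.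

Lemma Mon_step b a A G' D' :
  In (Sub b a) G -> In (FAll a A) G -> ~ sMon G b a A ->
  Permutation G' (FAll b A :: G) -> Permutation D' D ->
  static_result G' D'.
Proof.
  intros Hs Ha Hsat PG' PD'.
  pose proof (placed_left _ Hs). pose proof (placed_left _ Ha).
  split.
  - apply (static_step A0 H G D G' D' [] [] [FAll b A] [] G D);
      auto using Permutation_refl; try no_anchor; try no_InN; try apply Forall_nil.
    split_Forall. placed_from.
  - left. exists (FAll b A). split; [in_perm | apply kept_left_unseen; cbn; auto].
    intros Hb; apply Hsat; intros _ _; exact Hb.
Qed.

End StaticRules.

Definition update (f : nat -> address) (l : nat) (p : address) : nat -> address :=
  fun y => if Nat.eq_dec y l then p else f y.

Lemma update_eq f l p : update f l p l = p.
Proof. unfold update; destruct (Nat.eq_dec l l); congruence. Qed.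

Lemma update_neq f l p y : y <> l -> update f l p y = f y.
Proof. unfold update; destruct (Nat.eq_dec y l); congruence. Qed.

Lemma occurs_step (labs : lform -> list nat) G D G' D' pG pD nG nD cG cD y :
  Permutation G (pG ++ cG) -> Permutation G' (nG ++ cG) ->
  Permutation D (pD ++ cD) -> Permutation D' (nD ++ cD) ->
  (exists f, (In f G' \/ In f D') /\ In y (labs f)) ->
  (exists f, (In f G \/ In f D) /\ In y (labs f)) \/ (exists f, In f (nG ++ nD) /\ In y (labs f)).
Proof.
  intros PG PG' PD PD' (f & Hf & Hy).
  destruct Hf as [Hf | Hf];
    [destruct (in_new_left G G' pG nG cG PG PG' f Hf) as [Ho | Hn]
    | destruct (in_new_right D D' pD nD cD PD PD' f Hf) as [Ho | Hn]];
    [left | right | left | right]; exists f; rewrite ?in_app_iff; auto.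
Qed.

Section FreshLabel.

Variables (A0 : formula) (H : list sequent) (G D G' D' : list lform)
  (pG pD nG nD cG cD : list lform) (aw an : nat -> address).
Hypothesis inv : search_inv A0 H G D aw an.
Hypotheses (PG : Permutation G (pG ++ cG)) (PG' : Permutation G' (nG ++ cG))
  (PD : Permutation D (pD ++ cD)) (PD' : Permutation D' (nD ++ cD)).
Hypothesis removed_left : Forall (removable_left H G D G' D') pG.
Hypothesis removed_right : Forall (removable_right H G D G' D') pD.
Hypothesis no_added_bar : forall x a A B, ~ In (FCnd x a A B) nG.

Lemma fresh_world_step (x : wlabel) (p : address) :
  ~ occW x G D ->
  (forall f, In f (nG ++ nD) ->
     lform_over (subformulas A0) f /\ levelled (cnd_depth A0) (update aw x p) an f
     /\ (forall y, In y (wlabs f) -> y = x \/ occW y G D)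
     /\ (forall b, In b (nlabs f) -> occN b G D)) ->
  (forall a y, ~ In (InN a y) nG) ->
  world_origin ((G, D) :: H) G' D' (update aw x p) an x ->
  addr_ok (subformulas A0) (cnd_depth A0) true p ->
  (forall z, occW z G D -> aw z <> p) ->
  search_inv A0 ((G, D) :: H) G' D' (update aw x p) an.
Proof.
  intros Hx Hadded HnoN Horig Hok Hunused.
  assert (Hnew : forall y, occW y G' D' -> y = x \/ occW y G D).
  { intros y Hy.
    destruct (occurs_step wlabs G D G' D' pG pD nG nD cG cD y PG PG' PD PD' Hy)
      as [? | (f & Hf & Hyf)]; auto. apply (Hadded f Hf); auto. }
  apply (frame_search_inv A0 H G D G' D' pG pD nG nD cG cD aw an); auto.
  - intros f Hf. destruct (Hadded f Hf) as (? & ? & _); auto.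
  - intros y a A B Hin. destruct (no_added_bar y a A B Hin).
  - apply (owner_unique_step G G' pG nG cG PG PG' HnoN), (nbhd_owner_unique _ _ _ _ _ _ inv).
  - intros y Hy. rewrite update_neq; auto. intros ->; contradiction.
  - intros y Hy Hold. destruct (Hnew y Hy) as [-> | ?]; [| contradiction].
    rewrite update_eq. split; [| split]; auto.
    intros z Hz E. destruct (Nat.eq_dec z x) as [-> | Hzx]; auto.
    rewrite update_neq in E by auto. exfalso.
    destruct (Hnew z Hz) as [-> | Oz]; [contradiction | exact (Hunused z Oz E)].
  - intros b Hb Hold. exfalso.
    destruct (occurs_step nlabs G D G' D' pG pD nG nD cG cD b PG PG' PD PD' Hb)
      as [? | (f & Hf & Hbf)]; [contradiction |].
    apply Hold, (Hadded f Hf); auto.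
Qed.

Lemma fresh_nbhd_step (a : nlabel) (x : wlabel) (p : address) :
  ~ occN a G D ->
  (forall f, In f (nG ++ nD) ->
     lform_over (subformulas A0) f /\ levelled (cnd_depth A0) aw (update an a p) f
     /\ (forall y, In y (wlabs f) -> occW y G D)
     /\ (forall b, In b (nlabs f) -> b = a \/ occN b G D)) ->
  (forall b y, In (InN b y) nG -> b = a /\ y = x) ->
  nbhd_origin ((G, D) :: H) G' D' aw (update an a p) a ->
  addr_ok (subformulas A0) (cnd_depth A0) false p ->
  (forall b, occN b G D -> an b <> p) ->
  search_inv A0 ((G, D) :: H) G' D' aw (update an a p).
Proof.
  intros Ha Hadded HInN Horig Hok Hunused.
  assert (Hnew : forall b, occN b G' D' -> b = a \/ occN b G D).
  { intros b Hb.
    destruct (occurs_step nlabs G D G' D' pG pD nG nD cG cD b PG PG' PD PD' Hb)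
      as [? | (f & Hf & Hbf)]; auto. apply (Hadded f Hf); auto. }
  assert (Hold_owner : forall b y, In (InN b y) G' -> In (InN b y) G \/ (b = a /\ y = x)).
  { intros b y Hin. destruct (in_new_left G G' pG nG cG PG PG' _ Hin); auto. }
  apply (frame_search_inv A0 H G D G' D' pG pD nG nD cG cD aw an); auto.
  - intros f Hf. destruct (Hadded f Hf) as (? & ? & _); auto.
  - intros y b A B Hin. destruct (no_added_bar y b A B Hin).
  - intros b y z Hy Hz.
    destruct (Hold_owner b y Hy) as [Hy' | [Eb Ey]], (Hold_owner b z Hz) as [Hz' | [Eb' Ez]].
    + exact (nbhd_owner_unique _ _ _ _ _ _ inv b y z Hy' Hz').
    + subst. exfalso; apply Ha. exists (InN a y); cbn; auto.
    + subst. exfalso; apply Ha. exists (InN a z); cbn; auto.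
    + congruence.
  - intros b Hb. rewrite update_neq; auto. intros ->; contradiction.
  - intros y Hy Hold. exfalso.
    destruct (occurs_step wlabs G D G' D' pG pD nG nD cG cD y PG PG' PD PD' Hy)
      as [? | (f & Hf & Hyf)]; [contradiction |].
    apply Hold, (Hadded f Hf); auto.
  - intros b Hb Hold. destruct (Hnew b Hb) as [-> | ?]; [| contradiction].
    rewrite update_eq. split; [| split]; auto.
    intros d Hd E. destruct (Nat.eq_dec d a) as [-> | Hda]; auto.
    rewrite update_neq in E by auto. exfalso.
    destruct (Hnew d Hd) as [-> | Od]; [contradiction | exact (Hunused d Od E)].
Qed.

End FreshLabel.

Section DynamicRules.

Variables (A0 : formula) (H : list sequent) (G D : list lform) (aw an : nat -> address).
Hypothesis inv : search_inv A0 H G D aw an.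

Lemma fresh_world_unseen x f : ~ occW x G D -> In x (wlabs f) -> ~ dA H G f.
Proof.
  intros Hx Hf Hd. apply Hx. apply (seen_labels_occur _ _ _ _ _ _ inv f); [left |]; auto.
Qed.

Lemma fresh_nbhd_unseen a f : ~ occN a G D -> In a (nlabs f) -> ~ dA H G f.
Proof.
  intros Ha Hf Hd. apply Ha. apply (seen_labels_occur _ _ _ _ _ _ inv f); [left |]; auto.
Qed.

Lemma Rall_address_unused a A z :
  occN a G D -> ~ sRall H G D a A -> occW z G D -> aw z <> ORall A :: an a.
Proof.
  intros Ha Hsat Hz E.
  destruct (world_addr_ok _ _ _ _ _ _ inv z Hz) as
    [[E' | [(A' & a' & E' & Hm & HA) | (A' & a' & E' & _)]] _]; rewrite E in E'; try discriminate.
  injection E' as -> E'.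
  assert (a' = a) as ->.
  { apply (nbhd_addr_inj _ _ _ _ _ _ inv); auto. exists (Mem z a'); cbn; auto. }
  apply Hsat. intros _. exists z; auto.
Qed.

Lemma Lex_address_unused a A z :
  occN a G D -> ~ sLex H G a A -> occW z G D -> aw z <> OLex A :: an a.
Proof.
  intros Ha Hsat Hz E.
  destruct (world_addr_ok _ _ _ _ _ _ inv z Hz) as
    [[E' | [(A' & a' & E' & _) | (A' & a' & E' & Hm & HA)]] _]; rewrite E in E'; try discriminate.
  injection E' as -> E'.
  assert (a' = a) as ->.
  { apply (nbhd_addr_inj _ _ _ _ _ _ inv); auto. exists (Mem z a'); cbn; auto. }
  apply Hsat. intros _. exists z; auto.
Qed.

Lemma Rcnd_address_unused x A B b :
  occW x G D -> ~ sRcnd H G D x A B -> occN b G D -> an b <> ORcnd A B :: aw x.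
Proof.
  intros Hx Hsat Hb E.
  destruct (nbhd_addr_ok _ _ _ _ _ _ inv b Hb) as
    [[(A' & B' & x' & E' & Hn & HA & HC) | (A' & B' & b' & x' & E' & _)] _];
    rewrite E in E'; try discriminate.
  injection E' as -> -> E'.
  assert (x' = x) as ->.
  { apply (world_addr_inj _ _ _ _ _ _ inv); auto. exists (InN b x'); cbn; auto. }
  apply Hsat. intros _. exists b; auto.
Qed.

Lemma Rall_step a A x ctx G' D' :
  Permutation D (FAll a A :: ctx) -> ~ occW x G D -> ~ sRall H G D a A ->
  Permutation G' (Mem x a :: G) -> Permutation D' (Lab x A :: ctx) ->
  search_inv A0 ((G, D) :: H) G' D' (update aw x (ORall A :: an a)) an
  /\ adds_new H G D G' D'.
Proof.
  intros PD Hx Hsat PG' PD'.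
  destruct (placed_right _ _ _ _ _ _ inv (FAll a A) ltac:(in_perm)) as (Hover & Hlev & _ & Hlab).
  cbn in Hover, Hlev.
  assert (Ha : occN a G D) by (apply Hlab; cbn; auto).
  destruct (nbhd_addr_ok _ _ _ _ _ _ inv a Ha) as [_ (Hwf & Hsteps & Hdepth)].
  split.
  - apply (fresh_world_step A0 H G D G' D' [] [FAll a A] [Mem x a] [Lab x A] G ctx aw an);
      auto using Permutation_refl; try apply Forall_nil; try no_anchor; try no_InN.
    + split_Forall. split; [cbn; tauto | split; [occurs_via (Mem x a) |]].
      exists x. split; [in_perm | apply dS_new; in_perm].
    + intros f Hf; cbn in Hf; destruct Hf as [<- | [<- | []]]; cbn; rewrite update_eq; cbn;
        repeat split; auto; try lia; intros ? Hy; cbn in Hy; intuition (subst; auto).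
    + right; left. exists A, a. rewrite update_eq.
      split; [auto | split; [in_perm | apply dS_new; in_perm]].
    + repeat split; auto. cbn; lia.
    + intros z Hz. exact (Rall_address_unused a A z Ha Hsat Hz).
  - left. exists (Mem x a). split; [in_perm | apply (fresh_world_unseen x); cbn; auto].
Qed.

Lemma Lex_step a A x ctx G' D' :
  Permutation G (FEx a A :: ctx) -> ~ occW x G D -> ~ sLex H G a A ->
  Permutation G' (Mem x a :: Lab x A :: ctx) -> Permutation D' D ->
  search_inv A0 ((G, D) :: H) G' D' (update aw x (OLex A :: an a)) an
  /\ adds_new H G D G' D'.
Proof.
  intros PG Hx Hsat PG' PD'.
  destruct (placed_left _ _ _ _ _ _ inv (FEx a A) ltac:(in_perm)) as (Hover & Hlev & _ & Hlab).
  cbn in Hover, Hlev.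
  assert (Ha : occN a G D) by (apply Hlab; cbn; auto).
  destruct (nbhd_addr_ok _ _ _ _ _ _ inv a Ha) as [_ (Hwf & Hsteps & Hdepth)].
  split.
  - apply (fresh_world_step A0 H G D G' D' [FEx a A] [] [Mem x a; Lab x A] [] ctx D aw an);
      auto using Permutation_refl; try apply Forall_nil; try no_anchor; try no_InN.
    + split_Forall. split; [cbn; tauto | split; [occurs_via (Mem x a) |]].
      exists x. split; [in_perm | apply dA_new; in_perm].
    + intros f Hf; cbn in Hf; destruct Hf as [<- | [<- | []]]; cbn; rewrite update_eq; cbn;
        repeat split; auto; try lia; intros ? Hy; cbn in Hy; intuition (subst; auto).
    + right; right. exists A, a. rewrite update_eq.
      split; [auto | split; [in_perm | apply dA_new; in_perm]].
    + repeat split; auto. cbn; lia.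
    + intros z Hz. exact (Lex_address_unused a A z Ha Hsat Hz).
  - left. exists (Mem x a). split; [in_perm | apply (fresh_world_unseen x); cbn; auto].
Qed.

Lemma Rcnd_step x A B a ctx G' D' :
  Permutation D (Lab x (Cnd A B) :: ctx) -> ~ occN a G D -> ~ sRcnd H G D x A B ->
  Permutation G' (InN a x :: FEx a A :: G) -> Permutation D' (FCnd x a A B :: ctx) ->
  search_inv A0 ((G, D) :: H) G' D' aw (update an a (ORcnd A B :: aw x))
  /\ adds_new H G D G' D'.
Proof.
  intros PD Ha Hsat PG' PD'.
  destruct (placed_right _ _ _ _ _ _ inv (Lab x (Cnd A B)) ltac:(in_perm))
    as (Hover & Hlev & Hlab & _).
  cbn in Hover, Hlev. destruct (subformulas_Cnd _ _ _ Hover) as (HA & HB & _).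
  assert (Hx : occW x G D) by (apply Hlab; cbn; auto).
  destruct (world_addr_ok _ _ _ _ _ _ inv x Hx) as [_ (Hwf & Hsteps & Hdepth)].
  split.
  - apply (fresh_nbhd_step A0 H G D G' D' [] [Lab x (Cnd A B)] [InN a x; FEx a A] [FCnd x a A B]
             G ctx aw an) with (x := x);
      auto using Permutation_refl; try apply Forall_nil; try no_anchor.
    + split_Forall. split; [cbn; tauto | split; [occurs_via (InN a x) |]].
      exists a. split; [in_perm | split; [apply dA_new; in_perm | in_perm]].
    + intros f Hf; cbn in Hf; destruct Hf as [<- | [<- | [<- | []]]]; cbn; rewrite ?update_eq; cbn;
        repeat split; auto; try lia; intros ? Hy; cbn in Hy; intuition (subst; auto).
    + intros b y [E | [E | []]]; [injection E as <- <-; auto | discriminate].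
    + left. exists A, B, x. rewrite update_eq.
      split; [auto | split; [in_perm | split; [apply dA_new; in_perm | in_perm]]].
    + repeat split; auto. constructor; [split |]; auto.
    + intros b Hb. exact (Rcnd_address_unused x A B b Hx Hsat Hb).
  - left. exists (InN a x). split; [in_perm | apply (fresh_nbhd_unseen a); cbn; auto].
Qed.

(* Mon∀ propagates [b ⊩∀ A -> B] along an L| chain; this keeps L| chains from repeating a
   pair (A, B). *)
Lemma bar_prefix_forces
    (Mon : forall b a F, In (Sub b a) G -> In (FAll a F) G -> In (FAll b F) G) A B :
  forall p c, an c = p -> occN c G D -> In (A, B) (bar_prefix p) -> In (FAll c (Imp A B)) G.
Proof.
  induction p as [| o p IH]; intros c E Hc Hin; [contradiction |].
  destruct (nbhd_addr_ok _ _ _ _ _ _ inv c Hc) as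
    [[(A' & B' & x' & E' & _) | (A' & B' & b & x' & E' & _ & Hs & _ & _ & Hall)] _];
    rewrite E in E'; injection E' as -> E'; cbn in Hin; [contradiction |].
  destruct Hin as [[= <- <-] | Hin]; [exact Hall |].
  apply (Mon c b); auto. apply (IH b); auto. exists (Sub c b); cbn; auto.
Qed.

Lemma Lbar_address_unused x a A B c :
  dA H G (FCnd x a A B) -> ~ sLbar H G x a A B -> occN c G D -> an c <> OLbar A B :: an a.
Proof.
  intros Hbar Hsat Hc E.
  destruct (bar_anchored _ _ _ _ _ _ inv x a A B Hbar) as [Hax _].
  destruct (nbhd_addr_ok _ _ _ _ _ _ inv c Hc) as
    [[(A' & B' & x' & E' & _) | (A' & B' & b & x' & E' & Hcx & Hcb & Hbx & HA & Hall)] _];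
    rewrite E in E'; try discriminate.
  injection E' as -> -> E'.
  assert (b = a) as ->.
  { apply (nbhd_addr_inj _ _ _ _ _ _ inv); auto; [exists (Sub c b) | exists (InN a x)]; cbn; auto. }
  assert (x' = x) as -> by (apply (nbhd_owner_unique _ _ _ _ _ _ inv a); auto).
  apply Hsat. intros _. exists c; auto.
Qed.

Lemma Lbar_address_ok x a A B :
  (forall b a F, In (Sub b a) G -> In (FAll a F) G -> In (FAll b F) G) ->
  (forall b, occN b G D -> In (Sub b b) G) ->
  In (FCnd x a A B) G -> ~ sLbar H G x a A B ->
  addr_ok (subformulas A0) (cnd_depth A0) false (OLbar A B :: an a).
Proof.
  intros Mon Ref Hbar Hsat.
  destruct (bar_anchored _ _ _ _ _ _ inv x a A B (or_introl Hbar)) as [Hax HA].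
  destruct (seen_placed _ _ _ _ _ _ _ inv (or_introl (or_introl Hbar))) as (Hover & _ & _ & Hlab).
  cbn in Hover. destruct (subformulas_Cnd _ _ _ Hover) as (HA0 & HB0 & _).
  assert (Ha : occN a G D) by (apply Hlab; cbn; auto).
  destruct (nbhd_addr_ok _ _ _ _ _ _ inv a Ha) as [_ (Hwf & Hsteps & Hdepth)].
  repeat split; auto.
  - intros Hin. apply Hsat. intros _. exists a.
    repeat split; auto. apply (bar_prefix_forces Mon A B (an a) a); auto.
  - constructor; [split |]; auto.
Qed.

Lemma Lbar_step x a A B c ctx G' D' :
  (forall b a F, In (Sub b a) G -> In (FAll a F) G -> In (FAll b F) G) ->
  (forall b, occN b G D -> In (Sub b b) G) ->
  Permutation G (FCnd x a A B :: ctx) -> ~ occN c G D -> ~ sLbar H G x a A B ->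
  Permutation G' (InN c x :: Sub c a :: FEx c A :: FAll c (Imp A B) :: ctx) -> Permutation D' D ->
  search_inv A0 ((G, D) :: H) G' D' aw (update an c (OLbar A B :: an a))
  /\ adds_new H G D G' D'.
Proof.
  intros Mon Ref PG Hc Hsat PG' PD'.
  assert (Hbar : In (FCnd x a A B) G) by in_perm.
  destruct (bar_anchored _ _ _ _ _ _ inv x a A B (or_introl Hbar)) as [Hax HA].
  destruct (placed_left _ _ _ _ _ _ inv _ Hbar) as (Hover & Hlev & Hlab).
  destruct (placed_left _ _ _ _ _ _ inv _ Hax) as (_ & Hlev' & _). cbn in Hover, Hlev, Hlev'.
  destruct (subformulas_Cnd _ _ _ Hover) as (HA0 & HB0 & HI0).
  assert (Hx : occW x G D) by (apply Hlab; cbn; auto).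
  assert (Ha : occN a G D) by (apply Hlab; cbn; auto).
  assert (Hac : a <> c) by (intros ->; contradiction).
  assert (Hax' : In (InN a x) G').
  { apply (Permutation_in _ PG) in Hax as [E | Hax]; [discriminate |].
    apply (Permutation_in _ (Permutation_sym PG')); cbn; auto 6. }
  split.
  - apply (fresh_nbhd_step A0 H G D G' D' [FCnd x a A B] []
             [InN c x; Sub c a; FEx c A; FAll c (Imp A B)] [] ctx D aw an) with (x := x);
      auto using Permutation_refl; try apply Forall_nil; try no_anchor.
    + split_Forall. split; [cbn; tauto | split; [occurs_via (InN a x) |]].
      exists c. repeat split; try in_perm. apply dA_new; in_perm.
    + intros f Hf; cbn in Hf; destruct Hf as [<- | [<- | [<- | [<- | []]]]]; cbn;
        rewrite ?update_eq, ?(update_neq _ c _ a Hac); cbn;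
        repeat split; auto; try lia; intros ? Hy; cbn in Hy; intuition (subst; auto).
    + intros b y Hin; cbn in Hin. destruct Hin as [E | Hin]; [injection E as <- <-; auto |].
      intuition discriminate.
    + right. exists A, B, a, x. rewrite update_eq, (update_neq _ c _ a Hac).
      repeat split; try in_perm; [exact Hax' | apply dA_new; in_perm].
    + exact (Lbar_address_ok x a A B Mon Ref Hbar Hsat).
    + intros d Hd. exact (Lbar_address_unused x a A B d (or_introl Hbar) Hsat Hd).
  - left. exists (InN c x). split; [in_perm | apply (fresh_nbhd_unseen c); cbn; auto].
Qed.

End DynamicRules.

Lemma rapp_applicable H G D r Q : rapp H G D r Q -> applicable H (G, D) r.
Proof.
  intros Hr. exists Q, Q. split; [exact Hr |].
  clear Hr. induction Q; constructor; auto. split; apply Permutation_refl.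
Qed.

Lemma Lbar_waits_for_Mon H G D : priority_ok H (G, D) RLbar ->
  forall b a F, In (Sub b a) G -> In (FAll a F) G -> In (FAll b F) G.
Proof.
  intros Hprio b a F Hs Ha. apply NNPP; intros Hn.
  apply (Hprio RMon); [unfold dynamic; intuition discriminate |].
  apply (rapp_applicable _ _ _ _ [(FAll b F :: G, D)]), ap_Mon with a; auto.
Qed.

Lemma Lbar_waits_for_Ref H G D : priority_ok H (G, D) RLbar ->
  forall b, occN b G D -> In (Sub b b) G.
Proof.
  intros Hprio b Hb. apply NNPP; intros Hn.
  apply (Hprio RRef); [unfold dynamic; intuition discriminate |].
  apply (rapp_applicable _ _ _ _ [(Sub b b :: G, D)]), ap_Ref.
  intros Hr. apply Hn, Hr, Hb.
Qed.

Lemma rule_step_inv A0 H G D aw an r Q S' G' D' :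
  search_inv A0 H G D aw an -> rapp H G D r Q -> priority_ok H (G, D) r ->
  In S' Q -> seq_perm (G', D') S' ->
  (exists aw' an', search_inv A0 ((G, D) :: H) G' D' aw' an') /\ adds_new H G D G' D'.
Proof.
  intros inv Hr Hprio HS [PG' PD'].
  enough (exists aw' an', search_inv A0 ((G, D) :: H) G' D' aw' an' /\ adds_new H G D G' D')
    as (aw' & an' & Hinv & Hnew) by eauto.
  destruct Hr; cbn in HS; repeat destruct HS as [<- | HS]; try contradiction;
    cbn [fst snd] in PG', PD'; do 2 eexists.
  - eapply Land_step; eauto.
  - eapply Rand_step with (C := A); eauto.
  - eapply Rand_step with (C := B); eauto.
  - eapply Lor_step with (C := A); eauto.
  - eapply Lor_step with (C := B); eauto.
  - eapply Ror_step; eauto.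
  - eapply Limp_step_left; eauto.
  - eapply Limp_step_right; eauto.
  - eapply Rimp_step; eauto.
  - eapply Lall_step; eauto.
  - eapply Rall_step; eauto.
  - eapply Lex_step; eauto.
  - eapply Rex_step; eauto.
  - eapply Rcnd_step; eauto.
  - eapply Lcnd_step_left; eauto.
  - eapply Lcnd_step_right; eauto.
  - eapply Rbar_step_left; eauto.
  - eapply Rbar_step_right; eauto.
  - eapply Lbar_step; eauto using Lbar_waits_for_Mon, Lbar_waits_for_Ref.
  - eapply (Ref_step _ _ _ _ _ _ inv a); eauto.
  - eapply (Tr_step _ _ _ _ _ _ inv a b c); eauto.
  - eapply (Lsub_step _ _ _ _ _ _ inv x a b); eauto.
  - eapply (Mon_step _ _ _ _ _ _ inv b a A); eauto.
Qed.

(** * Counting labelled formulas *)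

Inductive alform : Type :=
  | aInN (a x : address) | aMem (x a : address) | aSub (a b : address)
  | aLab (x : address) (F : formula) | aFEx (a : address) (F : formula)
  | aFAll (a : address) (F : formula) | aFCnd (x a : address) (A B : formula).

Definition abstract (aw an : nat -> address) (f : lform) : alform :=
  match f with
  | InN a x => aInN (an a) (aw x)
  | Mem x a => aMem (aw x) (an a)
  | Sub a b => aSub (an a) (an b)
  | Lab x F => aLab (aw x) F
  | FEx a F => aFEx (an a) F
  | FAll a F => aFAll (an a) F
  | FCnd x a A B => aFCnd (aw x) (an a) A B
  end.

Definition abstract_universe (A0 : formula) : list alform :=
  let P := addresses (subformulas A0) (cnd_depth A0) in
  let Sc := subformulas A0 in
  flat_map (fun p => flat_map (fun q => [aInN p q; aMem p q; aSub p q]) P) P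
  ++ flat_map (fun p => flat_map (fun F => [aLab p F; aFEx p F; aFAll p F]) Sc) P
  ++ flat_map (fun p => flat_map (fun q => flat_map (fun A => map (aFCnd p q A) Sc) Sc) P) P.

Section Counting.

Variables (A0 : formula) (H : list sequent) (G D : list lform) (aw an : nat -> address).
Hypothesis inv : search_inv A0 H G D aw an.

Lemma abstract_in_universe f : seen H G D f -> In (abstract aw an f) (abstract_universe A0).
Proof.
  intros Hf. destruct (seen_placed _ _ _ _ _ _ f inv Hf) as (Hover & _ & Hw & Hn).
  assert (Pw : forall x, In x (wlabs f) -> In (aw x) (addresses (subformulas A0) (cnd_depth A0))).
  { intros x Hx. eapply in_addresses, (world_addr_ok _ _ _ _ _ _ inv x (Hw x Hx)). }
  assert (Pn : forall a, In a (nlabs f) -> In (an a) (addresses (subformulas A0) (cnd_depth A0))).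
  { intros a Ha. eapply in_addresses, (nbhd_addr_ok _ _ _ _ _ _ inv a (Hn a Ha)). }
  unfold abstract_universe.
  destruct f as [a x | x a | a b | x F | a F | a F | x a A B]; cbn [abstract];
    rewrite !in_app_iff; cbn in Hover.
  - left. apply in_flat_map. exists (an a). split; [apply Pn; cbn; auto |].
    apply in_flat_map. exists (aw x). split; [apply Pw; cbn; auto | cbn; auto].
  - left. apply in_flat_map. exists (aw x). split; [apply Pw; cbn; auto |].
    apply in_flat_map. exists (an a). split; [apply Pn; cbn; auto | cbn; auto].
  - left. apply in_flat_map. exists (an a). split; [apply Pn; cbn; auto |].
    apply in_flat_map. exists (an b). split; [apply Pn; cbn; auto | cbn; auto].
  - right; left. apply in_flat_map. exists (aw x). split; [apply Pw; cbn; auto |].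
    apply in_flat_map. exists F. split; [auto | cbn; auto].
  - right; left. apply in_flat_map. exists (an a). split; [apply Pn; cbn; auto |].
    apply in_flat_map. exists F. split; [auto | cbn; auto].
  - right; left. apply in_flat_map. exists (an a). split; [apply Pn; cbn; auto |].
    apply in_flat_map. exists F. split; [auto | cbn; auto].
  - destruct (subformulas_Cnd _ _ _ Hover) as (HA & HB & _).
    right; right. apply in_flat_map. exists (aw x). split; [apply Pw; cbn; auto |].
    apply in_flat_map. exists (an a). split; [apply Pn; cbn; auto |].
    apply in_flat_map. exists A. split; [auto | apply in_map; auto].
Qed.

Lemma abstract_inj f g :
  seen H G D f -> seen H G D g -> abstract aw an f = abstract aw an g -> f = g.
Proof.
  intros Hf Hg E.
  destruct (seen_placed _ _ _ _ _ _ f inv Hf) as (_ & _ & Hwf & Hnf).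
  destruct (seen_placed _ _ _ _ _ _ g inv Hg) as (_ & _ & Hwg & Hng).
  assert (Iw : forall x y, In x (wlabs f) -> In y (wlabs g) -> aw x = aw y -> x = y)
    by (intros; apply (world_addr_inj _ _ _ _ _ _ inv); auto).
  assert (Ia : forall a b, In a (nlabs f) -> In b (nlabs g) -> an a = an b -> a = b)
    by (intros; apply (nbhd_addr_inj _ _ _ _ _ _ inv); auto).
  destruct f, g; cbn in E; try discriminate; injection E; intros; subst;
    cbn in Iw, Ia; f_equal; auto.
Qed.

Lemma seen_list_bound l :
  NoDup l -> (forall f, In f l -> seen H G D f) -> length l <= length (abstract_universe A0).
Proof.
  intros Hnd Hseen. rewrite <- (length_map (abstract aw an)). apply NoDup_incl_length.
  - apply NoDup_map_NoDup_ForallPairs; auto. intros f g Hf Hg. apply abstract_inj; auto.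
  - intros u Hu. apply in_map_iff in Hu as (f & <- & Hf). apply abstract_in_universe; auto.
Qed.

End Counting.

Definition lform_eq_dec (f g : lform) : {f = g} + {f <> g}.
Proof. repeat decide equality. Defined.

Definition seen_count (B : list sequent) : nat :=
  length (nodup lform_eq_dec (flat_map fst B)) + length (nodup lform_eq_dec (flat_map snd B)).

Lemma in_flat_map_fst H G D f : In f (flat_map fst ((G, D) :: H)) <-> dA H G f.
Proof. cbn; rewrite in_app_iff, in_flat_map; unfold dA; tauto. Qed.

Lemma in_flat_map_snd H G D f : In f (flat_map snd ((G, D) :: H)) <-> dS H D f.
Proof. cbn; rewrite in_app_iff, in_flat_map; unfold dS; tauto. Qed.

Lemma seen_count_bound A0 H G D aw an :
  search_inv A0 H G D aw an -> seen_count ((G, D) :: H) <= 2 * length (abstract_universe A0).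
Proof.
  intros inv. unfold seen_count.
  assert (length (nodup lform_eq_dec (flat_map fst ((G, D) :: H)))
          <= length (abstract_universe A0)).
  { apply (seen_list_bound _ H G D aw an inv); [apply NoDup_nodup |].
    intros f Hf; left. apply nodup_In, in_flat_map_fst in Hf; auto. }
  assert (length (nodup lform_eq_dec (flat_map snd ((G, D) :: H)))
          <= length (abstract_universe A0)).
  { apply (seen_list_bound _ H G D aw an inv); [apply NoDup_nodup |].
    intros f Hf; right. apply nodup_In, in_flat_map_snd in Hf; auto. }
  lia.
Qed.

Lemma nodup_length_le (l1 l2 : list lform) :
  incl l1 l2 -> length (nodup lform_eq_dec l1) <= length (nodup lform_eq_dec l2).
Proof.
  intros Hincl. apply NoDup_incl_length; [apply NoDup_nodup |].
  intros y Hy. apply nodup_In, Hincl. apply nodup_In in Hy. exact Hy.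
Qed.

Lemma nodup_length_lt (l1 l2 : list lform) y :
  incl l1 l2 -> In y l2 -> ~ In y l1 ->
  length (nodup lform_eq_dec l1) < length (nodup lform_eq_dec l2).
Proof.
  intros Hincl Hy Hn. apply (NoDup_incl_length (l := y :: nodup lform_eq_dec l1)).
  - constructor; [rewrite nodup_In; auto | apply NoDup_nodup].
  - intros z [<- | Hz]; apply nodup_In; auto. apply Hincl. apply nodup_In in Hz. exact Hz.
Qed.

Lemma seen_count_grows H G D G' D' :
  adds_new H G D G' D' -> seen_count ((G', D') :: (G, D) :: H) > seen_count ((G, D) :: H).
Proof.
  unfold seen_count.
  change (flat_map fst ((G', D') :: (G, D) :: H)) with (G' ++ flat_map fst ((G, D) :: H)).
  change (flat_map snd ((G', D') :: (G, D) :: H)) with (D' ++ flat_map snd ((G, D) :: H)).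
  pose proof (nodup_length_le (flat_map fst ((G, D) :: H)) _ (incl_appr G' (incl_refl _))).
  pose proof (nodup_length_le (flat_map snd ((G, D) :: H)) _ (incl_appr D' (incl_refl _))).
  intros [(f & Hf & Hn) | (f & Hf & Hn)].
  - enough (length (nodup lform_eq_dec (flat_map fst ((G, D) :: H)))
            < length (nodup lform_eq_dec (G' ++ flat_map fst ((G, D) :: H)))) by lia.
    apply nodup_length_lt with f; [apply incl_appr, incl_refl | apply in_or_app; auto |].
    rewrite in_flat_map_fst; exact Hn.
  - enough (length (nodup lform_eq_dec (flat_map snd ((G, D) :: H)))
            < length (nodup lform_eq_dec (D' ++ flat_map snd ((G, D) :: H)))) by lia.
    apply nodup_length_lt with f; [apply incl_appr, incl_refl | apply in_or_app; auto |].
    rewrite in_flat_map_snd; exact Hn.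
Qed.

(** * Termination *)

Definition branch_inv (A0 : formula) (B : list sequent) : Prop :=
  match B with
  | [] => False
  | (G, D) :: H => exists aw an, search_inv A0 H G D aw an
  end.

Lemma branch_inv_root A0 x0 : branch_inv A0 [root x0 A0].
Proof. exists (fun _ => []), (fun _ => []). apply root_search_inv. Qed.

Lemma Forall2_in_left {X Y} (R : X -> Y -> Prop) l1 l2 x :
  Forall2 R l1 l2 -> In x l1 -> exists y, In y l2 /\ R x y.
Proof.
  induction 1 as [| x' y' l1 l2 Hxy _ IH]; intros Hx; [contradiction |].
  destruct Hx as [<- | Hx]; [exists y'; cbn; auto |].
  destruct (IH Hx) as (y & Hy & Hr). exists y; cbn; auto.
Qed.

Lemma sstep_branch_inv A0 B S' :
  branch_inv A0 B -> sstep B S' -> branch_inv A0 (S' :: B) /\ seen_count (S' :: B) > seen_count B.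
Proof.
  destruct B as [| [G D] H]; cbn; [contradiction |].
  intros (aw & an & inv) (_ & r & P & (Q & Hr & HPQ) & Hprio & HP).
  destruct (Forall2_in_left _ _ _ _ HPQ HP) as (S'' & HS'' & Hperm).
  destruct S' as [G' D'].
  destruct (rule_step_inv A0 H G D aw an r Q S'' G' D' inv Hr Hprio HS'' Hperm) as [Hinv Hnew].
  split; [exact Hinv | apply seen_count_grows, Hnew].
Qed.

Lemma branch_inv_bound A0 B : branch_inv A0 B -> seen_count B <= 2 * length (abstract_universe A0).
Proof.
  destruct B as [| [G D] H]; [contradiction |].
  intros (aw & an & inv). eapply seen_count_bound, inv.
Qed.

Lemma search_terminates A0 n B :
  branch_inv A0 B -> 2 * length (abstract_universe A0) - seen_count B <= n ->
  Acc (fun B' B => extends B' B) B.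
Proof.
  revert B; induction n as [| n IH]; intros B HB Hn; constructor; intros B' (S' & -> & Hstep);
    destruct (sstep_branch_inv A0 B S' HB Hstep) as [HB' Hgrow];
    pose proof (branch_inv_bound A0 _ HB'); [lia |].
  apply IH; auto. lia.
Qed.

Lemma branch_inv_reachable A0 x0 B : branch (root x0 A0) B -> branch_inv A0 B.
Proof.
  induction 1; [apply branch_inv_root |]. apply (sstep_branch_inv A0 B S'); auto.
Qed.

(** * Dead ends *)

Lemma app_has_premise H S r P : Defs.app H S r P -> exists S', In S' P.
Proof. intros (Q & Hr & HPQ). destruct Hr; inversion HPQ; subst; eexists; cbn; eauto. Qed.

Lemma strategy_allows_some H S r P :
  Defs.app H S r P -> exists r' P', Defs.app H S r' P' /\ priority_ok H S r'.
Proof.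
  intros Happ.
  destruct (classic (exists r', ~ dynamic r' /\ r' <> RLcnd /\ applicable H S r'))
    as [(r' & Hstatic & HLcnd & P' & Happ') | Hno_static].
  { exists r', P'. split; auto. destruct r'; cbn; auto; exfalso;
      (apply Hstatic; unfold dynamic; auto; fail) || congruence. }
  assert (Hno_static' : forall r', ~ dynamic r' -> r' <> RLcnd -> ~ applicable H S r')
    by (intros r' Hd Hl Ha; apply Hno_static; exists r'; auto).
  destruct (classic (applicable H S RRcnd)) as [(P' & Happ') | Hno_Rcnd].
  { exists RRcnd, P'. split; auto. }
  destruct (classic (applicable H S RLcnd)) as [(P' & Happ') | Hno_Lcnd].
  { exists RLcnd, P'. split; auto. }
  exists r, P. split; auto.
  assert (Hno : forall r', ~ dynamic r' -> ~ applicable H S r').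
  { intros r' Hs. destruct (classic (r' = RLcnd)) as [-> | Hne]; auto. }
  destruct r; cbn; auto; exfalso; eauto.
Qed.

Lemma fresh_label (labs : lform -> list nat) (G D : list lform) :
  exists y, ~ exists f, (In f G \/ In f D) /\ In y (labs f).
Proof.
  exists (S (list_max (flat_map labs (G ++ D)))). intros (f & Hf & Hy).
  assert (Hin : In (S (list_max (flat_map labs (G ++ D)))) (flat_map labs (G ++ D)))
    by (apply in_flat_map; exists f; rewrite in_app_iff; auto).
  pose proof (proj1 (list_max_le (flat_map labs (G ++ D)) _) (le_n _)) as Hmax.
  rewrite Forall_forall in Hmax. specialize (Hmax _ Hin). lia.
Qed.

Lemma in_perm_split (p : lform) G : In p G -> exists ctx, Permutation G (p :: ctx).
Proof.
  intros Hp. apply in_split in Hp as (l1 & l2 & ->). exists (l1 ++ l2).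
  apply Permutation_sym, Permutation_middle.
Qed.

Section DeadEnd.

Variables (A0 : formula) (H : list sequent) (G D : list lform) (aw an : nat -> address).
Hypothesis inv : search_inv A0 H G D aw an.
Hypothesis no_rule : forall r Q, ~ rapp H G D r Q.

Lemma blocked_rule (P : Prop) r Q : (~ P -> rapp H G D r Q) -> P.
Proof. intros Hr. apply NNPP. intros Hn. exact (no_rule r Q (Hr Hn)). Qed.

Ltac refute_with ctor :=
  let Hn := fresh in let Hs := fresh in
  eapply blocked_rule; intros Hn; eapply ctor; eauto; intros Hs; apply Hn; apply Hs; eauto.

Ltac from_left f :=
  let Hg := fresh in let ctx := fresh "ctx" in
  destruct (left_done _ _ _ _ _ _ inv f ltac:(assumption)) as [Hg | ?]; [| assumption];
  destruct (in_perm_split _ _ Hg) as [ctx ?].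

Ltac from_right f :=
  let Hg := fresh in let ctx := fresh "ctx" in
  destruct (right_done _ _ _ _ _ _ inv f ltac:(assumption)) as [Hg | ?]; [| assumption];
  destruct (in_perm_split _ _ Hg) as [ctx ?].

Lemma dead_end_saturated : ~ initial (G, D) -> saturated H G D.
Proof.
  intros Hni.
  destruct (fresh_label wlabs G D) as [y Hy]. destruct (fresh_label nlabs G D) as [c Hc].
  split; [intros Hx; apply Hni; left; exact Hx |].
  split; [intros Hx; apply Hni; right; exact Hx |].
  repeat match goal with |- _ /\ _ => split end.
  - intros x A B Hd. from_left (Lab x (And A B)). refute_with ap_Land.
  - intros x A B Hd. from_right (Lab x (And A B)). refute_with ap_Rand.
  - intros x A B Hd. from_left (Lab x (Or A B)). refute_with ap_Lor.
  - intros x A B Hd. from_right (Lab x (Or A B)). refute_with ap_Ror.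
  - intros x A B Hd. from_left (Lab x (Imp A B)). refute_with ap_Limp.
  - intros x A B Hd. destruct (in_perm_split _ _ Hd) as [ctx ?]. refute_with ap_Rimp.
  - intros a Ha. refute_with (ap_Ref H G D a).
  - intros a b d Hab Hbd. refute_with (ap_Tr H G D a b d).
  - intros x a b Hxa Hab. refute_with (ap_Lsub H G D x a b).
  - intros x a A Hxa Ha. refute_with (ap_Lall H G D x a A).
  - intros a A Hd. from_right (FAll a A). refute_with (ap_Rall H G D a A y).
  - intros a A Hd. from_left (FEx a A). refute_with (ap_Lex H G D a A y).
  - intros x a A Hxa Ha. refute_with (ap_Rex H G D x a A).
  - intros x A B Hd. from_right (Lab x (Cnd A B)). refute_with (ap_Rcnd H G D x A B c).
  - intros a x A B Hax Hx. refute_with (ap_Lcnd H G D a x A B).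
  - intros d x a A B Hdx Hda Hx. refute_with (ap_Rbar H G D d x a A B).
  - intros x a A B Hd. from_left (FCnd x a A B). refute_with (ap_Lbar H G D x a A B c).
  - intros b a A Hba Ha. refute_with (ap_Mon H G D b a A).
Qed.

End DeadEnd.

Lemma stuck_branch_initial_or_saturated A0 x0 B :
  branch (root x0 A0) B -> (forall S', ~ sstep B S') ->
  (exists S H, B = S :: H /\ initial S) \/ branch_saturated B.
Proof.
  intros Hb Hstuck. pose proof (branch_inv_reachable _ _ _ Hb) as HB.
  destruct B as [| [G D] H]; [contradiction |].
  destruct (classic (initial (G, D))) as [Hi | Hni]; [left; eauto | right].
  destruct HB as (aw & an & inv). apply (dead_end_saturated A0 H G D aw an inv); auto.
  intros r Q Hr.
  destruct (rapp_applicable _ _ _ _ _ Hr) as [P Happ].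
  destruct (strategy_allows_some _ _ _ _ Happ) as (r' & P' & Happ' & Hprio).
  destruct (app_has_premise _ _ _ _ Happ') as [S' HS'].
  apply (Hstuck S'). split; [exact Hni | exists r', P'; auto].
Qed.

Theorem mainTheorem16 (A0 : formula) (x0 : wlabel) :
  (* termination: every branch of any strategy-conforming search is finite *)
  Acc (fun B' B => extends B' B) [root x0 A0] /\
  (* every branch ends with an initial or a saturated sequent *)
  (forall B, branch (root x0 A0) B -> (forall S', ~ sstep B S') ->
     (exists S H, B = S :: H /\ initial S) \/ branch_saturated B).
Proof.
  split.
  - exact (search_terminates A0 _ [root x0 A0] (branch_inv_root A0 x0) (le_n _)).
  - apply stuck_branch_initial_or_saturated.
Qed.
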